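(* Let $x=(x_1,\dots,x_n)$ be variables, $f=(f_1,\dots,f_n)$ differential-free terms such that the ODE $x'=f(x)$ locally evolves $x$ (in every state the value of $f$ is not the zero vector), $P$ a semianalytic formula, and $y=(y_1,\dots,y_n)$ variables fresh in $[x'=f(x)]P$. Then the formula $$[x'=f(x)]P\;\leftrightarrow\;\forall y\,[x'=f(x)\,\&\,P\vee x=y]\Big(x=y\rightarrow P\wedge\langle x'=f(x)\,\&\,P\vee x=y\rangle\, x\neq y\Big)$$ is valid.
   Context: Variables are real-valued; each variable $x$ has a differential variable $x'$. A state is a map from variables to $\mathbb{R}$. Terms are built from variables, rational constants, $+$, $\cdot$ and finitely many fixed function symbols interpreted as $C^\infty$ functions $\mathbb{R}^k\to\mathbb{R}$, evaluated as usual; differential-free terms contain no differential variables. Semianalytic formulas are built from comparisons $e\sim\tilde e$ ($\sim\in\{=,\ge,>\}$) of differential-free terms by $\wedge,\vee,\neg$. For vectors, $x=y$ abbreviates $\bigwedge_i x_i=y_i$, $x\neq y$ its negation, and $\forall y$ quantifies all $y_i$. Semantics of ODEs: $(\omega,\nu)\in[\![x'=f(x)\&Q]\!]$ iff there are $T\ge0$ and $\varphi:[0,T]\to$ states with $\varphi(0)=\omega$ on all variables except $x'$, $\varphi(T)=\nu$, and for all $\zeta\in[0,T]$: $\varphi(\zeta)$ satisfies $x'=f(x)\wedge Q$, $\varphi(\zeta)$ agrees with $\varphi(0)$ on variables other than $x,x'$, and, if $T>0$, $t\mapsto\varphi(t)(x)$ is differentiable at $\zeta$ with derivative $\varphi(\zeta)(x')$.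 $x'=f(x)$ without domain means $Q$ is true. $\omega\models[\alpha]\phi$ iff $\nu\models\phi$ for all $\nu$ with $(\omega,\nu)\in[\![\alpha]\!]$; $\omega\models\langle\alpha\rangle\phi$ iff $\nu\models\phi$ for some such $\nu$. A formula is valid if true in all states. *)

From Stdlib Require Import Reals Lra List QArith Qreals.
Import ListNotations.
Open Scope R_scope.
Set Implicit Arguments.

Inductive var := Var (i : nat) | DVar (i : nat).

Definition var_eqb (u v : var) : bool :=
  match u, v with
  | Var i, Var j => Nat.eqb i j
  | DVar i, DVar j => Nat.eqb i j
  | _, _ => false
  end.

Definition state := var -> R.

(** * Smooth (C^infinity) functions of k real arguments.
    A k-ary function is represented as g : (nat -> R) -> R depending only on
    the coordinates 0..k-1. *)
Definition upd (v : nat -> R) (i : nat) (a : R) : nat -> R :=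
  fun j => if Nat.eqb j i then a else v j.

Definition depends_only_on (k : nat) (g : (nat -> R) -> R) : Prop :=
  forall v w, (forall i, (i < k)%nat -> v i = w i) -> g v = g w.

Definition continuous_k (k : nat) (g : (nat -> R) -> R) : Prop :=
  forall v eps, 0 < eps -> exists delta, 0 < delta /\
    forall w, (forall i, (i < k)%nat -> Rabs (w i - v i) < delta) ->
      Rabs (g w - g v) < eps.

Definition has_pderiv (g : (nat -> R) -> R) (i : nat) (v : nat -> R) (d : R) : Prop :=
  forall eps, 0 < eps -> exists delta, 0 < delta /\
    forall h, h <> 0 -> Rabs h < delta ->
      Rabs ((g (upd v i (v i + h)) - g v) / h - d) < eps.

Fixpoint Cn (k n : nat) (g : (nat -> R) -> R) : Prop :=
  continuous_k k g /\
  match n with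
  | O => True
  | S m => forall i, (i < k)%nat -> exists dg : (nat -> R) -> R,
             (forall v, has_pderiv g i v (dg v)) /\ Cn k m dg
  end.

Definition smooth_k (k : nat) (g : (nat -> R) -> R) : Prop :=
  depends_only_on k g /\ forall n, Cn k n g.

Section Syntax.
Variable Sym : Type.

Inductive term :=
  | TVar (v : var)
  | TConst (q : Q)
  | TPlus (a b : term)
  | TTimes (a b : term)
  | TFn (s : Sym) (args : list term).

Variable I : Sym -> (nat -> R) -> R.

Fixpoint eval (st : state) (t : term) : R :=
  match t with
  | TVar v => st v
  | TConst q => Q2R q
  | TPlus a b => eval st a + eval st b
  | TTimes a b => eval st a * eval st b
  | TFn s args => I s (fun j => nth j (map (eval st) args) 0)
  end.

Fixpoint dfree (t : term) : bool :=
  match t with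
  | TVar (Var _) => true
  | TVar (DVar _) => false
  | TConst _ => true
  | TPlus a b | TTimes a b => dfree a && dfree b
  | TFn _ args => forallb dfree args
  end.

Fixpoint occurs (v : var) (t : term) : bool :=
  match t with
  | TVar u => var_eqb u v
  | TConst _ => false
  | TPlus a b | TTimes a b => occurs v a || occurs v b
  | TFn _ args => existsb (occurs v) args
  end.

Inductive cmp := CEq | CGe | CGt.

Inductive fml :=
  | FCmp (a : term) (c : cmp) (b : term)
  | FAnd (p q : fml)
  | FOr (p q : fml)
  | FNot (p : fml).

Fixpoint semianalytic (p : fml) : bool :=
  match p with
  | FCmp a _ b => dfree a && dfree b
  | FAnd p q | FOr p q => semianalytic p && semianalytic q
  | FNot p => semianalytic p
  end.

Fixpoint occurs_fml (v : var) (p : fml) : bool :=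
  match p with
  | FCmp a _ b => occurs v a || occurs v b
  | FAnd p q | FOr p q => occurs_fml v p || occurs_fml v q
  | FNot p => occurs_fml v p
  end.

Fixpoint holds (st : state) (p : fml) : Prop :=
  match p with
  | FCmp a CEq b => eval st a = eval st b
  | FCmp a CGe b => eval st a >= eval st b
  | FCmp a CGt b => eval st a > eval st b
  | FAnd p q => holds st p /\ holds st q
  | FOr p q => holds st p \/ holds st q
  | FNot p => ~ holds st p
  end.

(** * ODE semantics: [x' = f(x) & Q] with xs the variable vector (indices)
    and fs the right-hand sides. *)
Definition in_xs (xs : list nat) (v : var) : Prop :=
  exists i, In i xs /\ (v = Var i \/ v = DVar i).

Definition is_dvar_of (xs : list nat) (v : var) : Prop :=
  exists i, In i xs /\ v = DVar i.

Definition deriv_within (T : R) (g : R -> R) (zeta d : R) : Prop :=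
  forall eps, 0 < eps -> exists delta, 0 < delta /\
    forall t, 0 <= t <= T -> t <> zeta -> Rabs (t - zeta) < delta ->
      Rabs ((g t - g zeta) / (t - zeta) - d) < eps.

Definition ode_rel (xs : list nat) (fs : list term) (Q : state -> Prop)
  (omega nu : state) : Prop :=
  exists (T : R) (phi : R -> state),
    0 <= T /\
    (forall v, ~ is_dvar_of xs v -> phi 0 v = omega v) /\
    phi T = nu /\
    forall zeta, 0 <= zeta <= T ->
      (forall k, (k < length xs)%nat ->
         phi zeta (DVar (nth k xs O)) = eval (phi zeta) (nth k fs (TConst 0%Q))) /\
      Q (phi zeta) /\
      (forall v, ~ in_xs xs v -> phi zeta v = phi 0 v) /\
      (0 < T -> forall k, (k < length xs)%nat ->
         deriv_within T (fun t => phi t (Var (nth k xs O))) zeta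
                        (phi zeta (DVar (nth k xs O)))).

Definition box (rel : state -> state -> Prop) (post : state -> Prop) (omega : state) : Prop :=
  forall nu, rel omega nu -> post nu.

Definition diamond (rel : state -> state -> Prop) (post : state -> Prop) (omega : state) : Prop :=
  exists nu, rel omega nu /\ post nu.

Definition vec_eq (st : state) (xs ys : list nat) : Prop :=
  forall k, (k < length xs)%nat -> st (Var (nth k xs O)) = st (Var (nth k ys O)).

Fixpoint assign (st : state) (ys : list nat) (a : nat -> R) : state :=
  match ys with
  | [] => st
  | y :: ys' => fun v => if var_eqb v (Var y) then a O
                         else assign st ys' (fun k => a (S k)) v
  end.

End Syntax.

(* (->) Resetting the fresh variables [y] turns a guarded solution from the modified
   state back into an unguarded solution from the original state, so [P] holds along it.
   At a state with [x = y] the vector field is non-zero, so the solution through it,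
   which exists by the Picard–Lindelöf theorem, leaves [x = y] immediately, and [P] still
   holds along it for the same reason; this witnesses the diamond.
   (<-) If [P] fails along a solution, let [s] be the first failure time and let [y] be
   the value of [x] at [s]. Up to [s] the solution respects the guard, so the hypothesis
   gives [P] at [s] and a guarded solution from there that ends off [x = y]. That solution
   leaves [x = y] at once, so the guard forces [P] along it; by local uniqueness (smooth
   right-hand sides are locally Lipschitz) it is the original solution just after [s],
   contradicting the choice of [s]. *)

From Stdlib Require Import Reals Lra Lia List FunctionalExtensionality QArith FinFun Classical.
From Coquelicot Require Import Coquelicot.
Import ListNotations.
Open Scope R_scope.

Fixpoint sum_lt (n : nat) (f : nat -> R) : R :=
  match n with O => 0 | S m => sum_lt m f + f m end.

Lemma sum_lt_ge0 n f : (forall i, (i < n)%nat -> 0 <= f i) -> 0 <= sum_lt n f.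
Proof.
  induction n as [|n IH]; simpl; intros H; [lra|].
  pose proof (H n ltac:(lia)); pose proof (IH ltac:(intros; apply H; lia)); lra.
Qed.

Lemma sum_lt_le_const n f c :
  (forall i, (i < n)%nat -> f i <= c) -> sum_lt n f <= INR n * c.
Proof.
  induction n as [|n IH]; cbn [sum_lt]; intros H; [simpl; lra|].
  rewrite S_INR; pose proof (H n ltac:(lia)); pose proof (IH ltac:(intros; apply H; lia)); lra.
Qed.

Lemma le_sum_lt n f k :
  (forall i, (i < n)%nat -> 0 <= f i) -> (k < n)%nat -> f k <= sum_lt n f.
Proof.
  induction n as [|n IH]; simpl; intros H Hk; [lia|].
  assert (0 <= sum_lt n f) by (apply sum_lt_ge0; intros; apply H; lia).
  destruct (Nat.eq_dec k n) as [->|]; [lra|].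
  pose proof (H n ltac:(lia)); pose proof (IH ltac:(intros; apply H; lia) ltac:(lia)); lra.
Qed.

Lemma Rabs_triang3 a b c d : Rabs (a - d) <= Rabs (a - b) + Rabs (b - c) + Rabs (c - d).
Proof.
  pose proof (Rabs_triang (a - b) (b - c)); pose proof (Rabs_triang (a - c) (c - d)).
  replace (a - b + (b - c)) with (a - c) in * by ring.
  replace (a - c + (c - d)) with (a - d) in * by ring.
  lra.
Qed.

Definition dist1 n (z w : nat -> R) := sum_lt n (fun j => Rabs (z j - w j)).

Definition close n r (z w : nat -> R) := forall j, (j < n)%nat -> Rabs (z j - w j) < r.

Lemma dist1_ge0 n z w : 0 <= dist1 n z w.
Proof. apply sum_lt_ge0; intros; apply Rabs_pos. Qed.

Lemma Rabs_le_dist1 n z w k : (k < n)%nat -> Rabs (z k - w k) <= dist1 n z w.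
Proof.
  intros Hk; apply (le_sum_lt n (fun j => Rabs (z j - w j))); auto.
  intros; apply Rabs_pos.
Qed.

Lemma dist1_le_close n r z w : close n r z w -> dist1 n z w <= INR n * r.
Proof. intros H; apply sum_lt_le_const; intros i Hi; left; apply H, Hi. Qed.

Lemma close_weaken n r r' z w : r <= r' -> close n r z w -> close n r' z w.
Proof. intros Hr H j Hj; specialize (H j Hj); lra. Qed.

Lemma close_refl n r z : 0 < r -> close n r z z.
Proof. intros Hr j _; rewrite Rminus_diag, Rabs_R0; exact Hr. Qed.

Lemma uniform_constants n (P : nat -> R -> R -> Prop) :
  (forall i r r' L L', r' <= r -> L <= L' -> 0 < r' -> P i r L -> P i r' L') ->
  (forall i, (i < n)%nat -> exists r L, 0 < r /\ 0 <= L /\ P i r L) ->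
  exists r L, 0 < r /\ 0 <= L /\ forall i, (i < n)%nat -> P i r L.
Proof.
  intros Hmono. induction n as [|n IH]; intros H.
  - exists 1, 0; repeat split; try lra; intros; lia.
  - destruct IH as (r & L & Hr & HL & HP); [intros; apply H; lia|].
    destruct (H n ltac:(lia)) as (r1 & L1 & Hr1 & HL1 & HP1).
    assert (Hmin : 0 < Rmin r r1) by (apply Rmin_pos; auto).
    exists (Rmin r r1), (Rmax L L1); repeat split; auto.
    + apply Rle_trans with L; auto; apply Rmax_l.
    + intros i Hi; destruct (Nat.eq_dec i n) as [->|].
      * eapply Hmono; [apply Rmin_r | apply Rmax_r | exact Hmin | exact HP1].
      * eapply Hmono; [apply Rmin_l | apply Rmax_l | exact Hmin | apply HP; lia].
Qed.

Lemma half_pow_pos m : 0 < (/2)^m.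
Proof. apply pow_lt; lra. Qed.

Lemma le_of_le_geom x a K : (forall m, x <= a + K * (/2)^m) -> x <= a.
Proof.
  intros H; apply Rnot_lt_le; intros Hlt.
  pose proof (Rabs_pos K); pose proof (Rle_abs K).
  destruct (pow_lt_1_zero (/2) ltac:(rewrite Rabs_pos_eq; lra) ((x - a) / (Rabs K + 1)))
    as [N HN]; [apply Rdiv_lt_0_compat; lra|].
  specialize (HN N (le_n _)); rewrite Rabs_pos_eq in HN by (left; apply half_pow_pos).
  specialize (H N); pose proof (half_pow_pos N).
  apply Rmult_lt_compat_l with (r := Rabs K + 1) in HN; [|lra].
  replace ((Rabs K + 1) * ((x - a) / (Rabs K + 1))) with (x - a) in HN by (field; lra).
  assert (K * (/2)^N <= Rabs K * (/2)^N) by (apply Rmult_le_compat_r; lra).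
  lra.
Qed.

Lemma eq0_of_le_geom x K : 0 <= x -> (forall m, x <= K * (/2)^m) -> x = 0.
Proof.
  intros Hx H; enough (x <= 0) by lra.
  apply (le_of_le_geom x 0 K); intros m; specialize (H m); lra.
Qed.

Lemma geom_cauchy (u : nat -> R) C :
  (forall m, Rabs (u (S m) - u m) <= C * (/2)^m) ->
  forall m p, (m <= p)%nat -> Rabs (u p - u m) <= 2 * C * (/2)^m.
Proof.
  intros H m p Hp.
  assert (Tele : forall d, Rabs (u (m + d)%nat - u m) <= 2 * C * (/2)^m - 2 * C * (/2)^(m + d)).
  { induction d as [|d IH].
    - rewrite Nat.add_0_r, Rminus_diag, Rabs_R0; lra.
    - replace (m + S d)%nat with (S (m + d)) by lia.
      pose proof (H (m + d)%nat); simpl pow.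
      pose proof (Rabs_triang (u (S (m + d)) - u (m + d)%nat) (u (m + d)%nat - u m)).
      replace (u (S (m + d)) - u (m + d)%nat + (u (m + d)%nat - u m))
        with (u (S (m + d)) - u m) in * by ring.
      lra. }
  replace p with (m + (p - m))%nat by lia.
  pose proof (Tele (p - m)%nat); pose proof (Rabs_pos (u (m + (p - m))%nat - u m)).
  pose proof (half_pow_pos (m + (p - m))).
  assert (0 <= C).
  { specialize (H O); simpl in H; pose proof (Rabs_pos (u 1%nat - u O)); lra. }
  nra.
Qed.

Definition seq_lim (u : nat -> R) : R := real (Lim_seq u).

Lemma seq_lim_geom (u : nat -> R) C :
  (forall m, Rabs (u (S m) - u m) <= C * (/2)^m) ->
  forall m, Rabs (seq_lim u - u m) <= 2 * C * (/2)^m.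
Proof.
  intros H m.
  assert (HC : 0 <= C).
  { specialize (H O); simpl in H; pose proof (Rabs_pos (u 1%nat - u O)); lra. }
  assert (Hcauchy : ex_lim_seq_cauchy u).
  { intros [eps Heps]; simpl.
    destruct (pow_lt_1_zero (/2) ltac:(rewrite Rabs_pos_eq; lra) (eps / (4 * C + 1)))
      as [N HN]; [apply Rdiv_lt_0_compat; lra|].
    exists N; intros p q Hp Hq.
    specialize (HN N (le_n _)); rewrite Rabs_pos_eq in HN by (left; apply half_pow_pos).
    pose proof (geom_cauchy u C H N p Hp); pose proof (geom_cauchy u C H N q Hq).
    pose proof (Rabs_triang (u p - u N) (u N - u q)); rewrite (Rabs_minus_sym (u N)) in *.
    replace (u p - u N + (u N - u q)) with (u p - u q) in * by ring.
    apply Rmult_lt_compat_l with (r := 4 * C + 1) in HN; [|lra].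
    replace ((4 * C + 1) * (eps / (4 * C + 1))) with eps in HN by (field; lra).
    pose proof (half_pow_pos N); nra. }
  apply ex_lim_seq_cauchy_corr, Lim_seq_correct' in Hcauchy.
  assert (Hlim : is_lim_seq (fun p => Rabs (u (p + m)%nat - u m)) (Rabs (seq_lim u - u m))).
  { apply (is_lim_seq_abs _ (seq_lim u - u m)), is_lim_seq_minus'; [|apply is_lim_seq_const].
    exact (proj1 (is_lim_seq_incr_n u m (seq_lim u)) Hcauchy). }
  exact (is_lim_seq_le _ _ _ _ (fun p => geom_cauchy u C H m (p + m) ltac:(lia))
           Hlim (is_lim_seq_const _)).
Qed.

Lemma first_failure (Q : R -> Prop) T : 0 <= T -> ~ Q T ->
  exists s, 0 <= s <= T /\ (forall u, 0 <= u < s -> Q u) /\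
    forall del, 0 < del -> exists u, s <= u <= T /\ u < s + del /\ ~ Q u.
Proof.
  intros HT HnQ.
  set (B := fun t => 0 <= t <= T /\ forall u, 0 <= u < t -> Q u).
  destruct (completeness B) as (s & Hub & Hleast).
  { exists T; intros t (Ht & _); lra. }
  { exists 0; split; [lra | intros u Hu; lra]. }
  assert (Hs0 : 0 <= s) by (apply Hub; split; [lra | intros; lra]).
  assert (HsT : s <= T) by (apply Hleast; intros t (Ht & _); lra).
  assert (Hbefore : forall u, 0 <= u < s -> Q u).
  { intros u Hu; apply NNPP; intros Hn.
    enough (s <= u) by lra.
    apply Hleast; intros t (Ht & Hp); apply Rnot_lt_le; intros Hut; apply Hn, Hp; lra. }
  exists s; repeat split; auto; intros del Hdel; apply NNPP; intros Hn.
  destruct (Req_dec s T) as [->|HsT']; [apply Hn; exists T; repeat split; auto; lra|].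
  assert (Hst' : s < Rmin (s + del / 2) T) by (apply Rmin_glb_lt; lra).
  pose proof (Rmin_l (s + del / 2) T); pose proof (Rmin_r (s + del / 2) T).
  set (t' := Rmin (s + del / 2) T) in *.
  enough (HB : B t') by (specialize (Hub t' HB); lra).
  split; [lra|]; intros u Hu; destruct (Rlt_dec u s); [apply Hbefore; lra|].
  apply NNPP; intros Hnu; apply Hn; exists u; repeat split; auto; lra.
Qed.

Lemma deriv_within_continuous T g x d :
  deriv_within T g x d -> forall eps, 0 < eps -> exists del, 0 < del /\
    forall y, 0 <= y <= T -> Rabs (y - x) < del -> Rabs (g y - g x) < eps.
Proof.
  intros H eps Heps; destruct (H 1 ltac:(lra)) as (d1 & Hd1 & H1).
  pose proof (Rabs_pos d).
  assert (Hdel : 0 < eps / (Rabs d + 2)) by (apply Rdiv_lt_0_compat; lra).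
  exists (Rmin d1 (eps / (Rabs d + 2))); split; [apply Rmin_pos; auto|].
  intros y Hy Hyx; pose proof (Rmin_l d1 (eps / (Rabs d + 2))).
  pose proof (Rmin_r d1 (eps / (Rabs d + 2))).
  destruct (Req_dec y x) as [->|Hne]; [rewrite Rminus_diag, Rabs_R0; lra|].
  specialize (H1 y Hy Hne ltac:(lra)).
  assert (Hyx0 : y - x <> 0) by lra.
  replace (g y - g x) with (((g y - g x) / (y - x) - d) * (y - x) + d * (y - x))
    by (field; auto).
  eapply Rle_lt_trans; [apply Rabs_triang|]; rewrite !Rabs_mult.
  assert (Rabs (y - x) * (Rabs d + 2) < eps).
  { apply Rlt_le_trans with (eps / (Rabs d + 2) * (Rabs d + 2)).
    - apply Rmult_lt_compat_r; lra.
    - right; field; lra. }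
  pose proof (Rabs_pos (y - x)); nra.
Qed.

Lemma deriv_within_restrict T T' g x d :
  T' <= T -> deriv_within T g x d -> deriv_within T' g x d.
Proof.
  intros HT H eps He; destruct (H eps He) as (del & Hd & H1).
  exists del; split; auto; intros t Ht; apply H1; lra.
Qed.

Lemma deriv_within_ext T g h x d :
  (forall t, 0 <= t <= T -> g t = h t) -> 0 <= x <= T ->
  deriv_within T g x d -> deriv_within T h x d.
Proof.
  intros E Hx H eps He; destruct (H eps He) as (del & Hd & H1).
  exists del; split; auto; intros t Ht Htx Htd; rewrite <- !E by auto; auto.
Qed.

Lemma deriv_within_minus T g h x a b :
  deriv_within T g x a -> deriv_within T h x b ->
  deriv_within T (fun t => g t - h t) x (a - b).
Proof.
  intros H1 H2 eps He.
  destruct (H1 (eps / 2) ltac:(lra)) as (d1 & Hd1 & K1).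
  destruct (H2 (eps / 2) ltac:(lra)) as (d2 & Hd2 & K2).
  exists (Rmin d1 d2); split; [apply Rmin_pos; auto|].
  intros t Ht Htx Htd; pose proof (Rmin_l d1 d2); pose proof (Rmin_r d1 d2).
  specialize (K1 t Ht Htx ltac:(lra)); specialize (K2 t Ht Htx ltac:(lra)).
  assert (t - x <> 0) by lra.
  replace ((g t - h t - (g x - h x)) / (t - x) - (a - b))
    with (((g t - g x) / (t - x) - a) + - ((h t - h x) / (t - x) - b)) by (field; auto).
  eapply Rle_lt_trans; [apply Rabs_triang|]; rewrite Rabs_Ropp; lra.
Qed.

Lemma deriv_within_shift T g s u d :
  0 <= s -> deriv_within T g (s + u) d -> deriv_within (T - s) (fun u => g (s + u)) u d.
Proof.
  intros Hs H eps He; destruct (H eps He) as (del & Hd & H1).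
  exists del; split; auto; intros t Ht Htu Htd.
  replace (t - u) with (s + t - (s + u)) in * by ring.
  apply H1; auto; lra.
Qed.

Lemma deriv_within_concat T1 T2 g1 g2 zeta d :
  0 <= T1 -> 0 <= T2 -> g2 0 = g1 T1 -> 0 <= zeta <= T1 + T2 ->
  (0 < T1 -> zeta <= T1 -> deriv_within T1 g1 zeta d) ->
  (0 < T2 -> T1 <= zeta -> deriv_within T2 g2 (zeta - T1) d) ->
  deriv_within (T1 + T2) (fun t => if Rle_dec t T1 then g1 t else g2 (t - T1)) zeta d.
Proof.
  intros HT1 HT2 Hjoin Hz H1 H2 eps He.
  set (g := fun t => if Rle_dec t T1 then g1 t else g2 (t - T1)).
  set (good := fun t => Rabs ((g t - g zeta) / (t - zeta) - d) < eps).
  assert (Left : exists d1, 0 < d1 /\ forall t, 0 <= t <= T1 -> t <> zeta ->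
                   Rabs (t - zeta) < d1 -> good t).
  { destruct (Rle_dec zeta T1) as [Hle|Hgt].
    - destruct (Rlt_dec 0 T1) as [Hpos|Hnpos].
      + destruct (H1 Hpos Hle eps He) as (d1 & Hd1 & K).
        exists d1; split; auto; intros t Ht Htz Htd; unfold good, g.
        destruct (Rle_dec t T1), (Rle_dec zeta T1); try lra; auto.
      + exists 1; split; [lra|]; intros t Ht Htz; lra.
    - exists (zeta - T1); split; [lra|]; intros t Ht _ Htd.
      apply Rabs_lt_between' in Htd; lra. }
  assert (Right : exists d2, 0 < d2 /\ forall t, T1 < t <= T1 + T2 -> t <> zeta ->
                    Rabs (t - zeta) < d2 -> good t).
  { destruct (Rle_dec T1 zeta) as [Hle|Hgt].
    - destruct (Rlt_dec 0 T2) as [Hpos|Hnpos].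
      + destruct (H2 Hpos Hle eps He) as (d2 & Hd2 & K).
        exists d2; split; auto; intros t Ht Htz Htd; unfold good, g.
        assert (Hgz : (if Rle_dec zeta T1 then g1 zeta else g2 (zeta - T1)) = g2 (zeta - T1)).
        { destruct (Rle_dec zeta T1); auto.
          replace zeta with T1 by lra; rewrite Rminus_diag; auto. }
        rewrite Hgz; destruct (Rle_dec t T1); [lra|].
        replace (t - zeta) with (t - T1 - (zeta - T1)) in * by ring.
        apply K; auto; lra.
      + exists 1; split; [lra|]; intros t Ht; lra.
    - exists (T1 - zeta); split; [lra|]; intros t Ht _ Htd.
      apply Rabs_lt_between' in Htd; lra. }
  destruct Left as (d1 & Hd1 & KL); destruct Right as (d2 & Hd2 & KR).
  exists (Rmin d1 d2); split; [apply Rmin_pos; auto|].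
  intros t Ht Htz Htd; change (good t); pose proof (Rmin_l d1 d2); pose proof (Rmin_r d1 d2).
  destruct (Rle_dec t T1); [apply KL | apply KR]; auto; lra.
Qed.

Definition clamp (T t : R) := Rmax 0 (Rmin T t).

Lemma clamp_in T t : 0 <= T -> 0 <= clamp T t <= T.
Proof. intros; unfold clamp, Rmax, Rmin; repeat destruct Rle_dec; lra. Qed.

Lemma clamp_id T t : 0 <= t <= T -> clamp T t = t.
Proof. intros; unfold clamp, Rmax, Rmin; repeat destruct Rle_dec; lra. Qed.

Lemma clamp_lipschitz T t t' : 0 <= T -> Rabs (clamp T t - clamp T t') <= Rabs (t - t').
Proof. intros; unfold clamp, Rmax, Rmin; repeat destruct Rle_dec; split_Rabs; lra. Qed.

Lemma continuity_pt_intro f x :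
  (forall eps, 0 < eps -> exists del, 0 < del /\
     forall y, Rabs (y - x) < del -> Rabs (f y - f x) < eps) ->
  continuity_pt f x.
Proof.
  intros H eps He; destruct (H eps He) as (del & Hd & H1).
  exists del; split; auto; intros y [_ Hy]; apply H1, Hy.
Qed.

Lemma mean_value_ineq h g g' K :
  0 < h -> (forall s, 0 <= s <= h -> deriv_within h g s (g' s)) ->
  (forall s, 0 <= s <= h -> Rabs (g' s) <= K) ->
  forall t, 0 <= t <= h -> Rabs (g t - g 0) <= K * t.
Proof.
  intros Hh Hd HK t Ht.
  destruct (Req_dec t 0) as [->|Ht0]; [rewrite Rminus_diag, Rabs_R0; lra|].
  set (gh := fun y => g (clamp h y)).
  destruct (MVT_gen gh 0 t g') as (c & Hc & E).
  - rewrite Rmin_left, Rmax_right by lra; intros x Hx; apply is_derive_Reals.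
    intros eps He; destruct (Hd x ltac:(lra) eps He) as (del & Hdel & H1).
    assert (Hp : 0 < Rmin del (Rmin x (h - x))) by (repeat apply Rmin_pos; lra).
    exists (mkposreal _ Hp); intros u Hu Hua; simpl in Hua.
    pose proof (Rmin_l del (Rmin x (h - x))); pose proof (Rmin_r del (Rmin x (h - x))).
    pose proof (Rmin_l x (h - x)); pose proof (Rmin_r x (h - x)).
    apply Rabs_lt_between in Hua as Hua'.
    unfold gh; rewrite !clamp_id by lra.
    replace u with (x + u - x) at 2 by ring.
    apply H1; try lra; replace (x + u - x) with u by ring; lra.
  - rewrite Rmin_left, Rmax_right by lra; intros x Hx; apply continuity_pt_intro.
    intros eps He.
    destruct (deriv_within_continuous h g x (g' x) (Hd x ltac:(lra)) eps He) as (del & Hdel & H1).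
    exists del; split; auto; intros y Hy; unfold gh; rewrite (clamp_id h x) by lra.
    apply H1; [apply clamp_in; lra|].
    pose proof (clamp_lipschitz h y x ltac:(lra)) as HL; rewrite (clamp_id h x) in HL by lra; lra.
  - rewrite Rmin_left, Rmax_right in Hc by lra; unfold gh in E; rewrite !clamp_id in E by lra.
    rewrite E, Rabs_mult, Rminus_0_r, (Rabs_pos_eq t) by lra.
    specialize (HK c ltac:(lra)); pose proof (Rabs_pos (g' c)); nra.
Qed.

Lemma continuous_of_lipschitz_at (f : R -> R) s c :
  (forall t, Rabs (f t - f s) <= c * Rabs (t - s)) -> continuous f s.
Proof.
  intros H; apply continuity_pt_filterlim, continuity_pt_intro; intros eps He.
  pose proof (Rabs_pos c); pose proof (Rle_abs c).
  exists (eps / (Rabs c + 1)); split; [apply Rdiv_lt_0_compat; lra|].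
  intros t Ht; eapply Rle_lt_trans; [apply H|].
  apply Rle_lt_trans with ((Rabs c + 1) * Rabs (t - s)).
  - pose proof (Rabs_pos (t - s)); nra.
  - apply Rlt_le_trans with ((Rabs c + 1) * (eps / (Rabs c + 1))).
    + apply Rmult_lt_compat_l; lra.
    + right; field; lra.
Qed.

Lemma ex_RInt_continuous_everywhere (g : R -> R) a b :
  (forall s, continuous g s) -> ex_RInt g a b.
Proof. intros H; apply (@ex_RInt_continuous R_CompleteNormedModule); intros; apply H. Qed.

Lemma RInt_diff_le (g : R -> R) B a b c :
  (forall s, continuous g s) -> (forall s, Rabs (g s) <= B) ->
  Rabs (RInt g a b - RInt g a c) <= B * Rabs (b - c).
Proof.
  intros Hc HB.
  pose proof (RInt_Chasles g a c b (ex_RInt_continuous_everywhere g a c Hc)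
                (ex_RInt_continuous_everywhere g c b Hc)) as E.
  change (RInt g a c + RInt g c b = RInt g a b) in E.
  replace (RInt g a b - RInt g a c) with (RInt g c b) by lra.
  destruct (Rle_dec c b).
  - rewrite (Rabs_pos_eq (b - c)), Rmult_comm by lra.
    apply abs_RInt_le_const; auto; apply ex_RInt_continuous_everywhere; auto.
  - rewrite <- (opp_RInt_swap g b c) by (apply ex_RInt_continuous_everywhere; auto).
    change (Rabs (- RInt g b c) <= B * Rabs (b - c)).
    rewrite Rabs_Ropp, Rabs_minus_sym, (Rabs_pos_eq (c - b)), Rmult_comm by lra.
    apply abs_RInt_le_const; auto; [lra|apply ex_RInt_continuous_everywhere; auto].
Qed.

Lemma RInt_0_le (g : R -> R) B c :
  (forall s, continuous g s) -> (forall s, Rabs (g s) <= B) -> Rabs (RInt g 0 c) <= B * Rabs c.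
Proof.
  intros Hc HB; pose proof (RInt_diff_le g B 0 c 0 Hc HB) as H.
  rewrite RInt_point in H; change (zero : R) with 0 in H; rewrite !Rminus_0_r in H; exact H.
Qed.

Lemma RInt_minus_continuous (f g : R -> R) a b :
  (forall s, continuous f s) -> (forall s, continuous g s) ->
  RInt (fun s => f s - g s) a b = RInt f a b - RInt g a b.
Proof. intros; apply (RInt_minus f g a b); apply ex_RInt_continuous_everywhere; auto. Qed.


(** * Locally Lipschitz maps and the Picard–Lindelöf theorem *)

Definition loc_lipschitz n (F : (nat -> R) -> R) :=
  forall z0, exists r L, 0 < r /\ 0 <= L /\
    forall z w, close n r z z0 -> close n r w z0 -> Rabs (F z - F w) <= L * dist1 n z w.

Lemma loc_lipschitz_uniform n m (F : (nat -> R) -> nat -> R) z0 :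
  (forall i, (i < m)%nat -> loc_lipschitz n (fun z => F z i)) ->
  exists r L, 0 < r /\ 0 <= L /\ forall z w, close n r z z0 -> close n r w z0 ->
    forall i, (i < m)%nat -> Rabs (F z i - F w i) <= L * dist1 n z w.
Proof.
  intros H.
  destruct (uniform_constants m (fun i r L => forall z w, close n r z z0 -> close n r w z0 ->
              Rabs (F z i - F w i) <= L * dist1 n z w)) as (r & L & Hr & HL & HP).
  - intros i r r' L L' Hr HL' Hr' HP z w Hz Hw.
    eapply Rle_trans; [apply HP; eapply close_weaken; eauto|].
    apply Rmult_le_compat_r; [apply dist1_ge0 | exact HL'].
  - intros i Hi; exact (H i Hi z0).
  - exists r, L; repeat split; auto.
Qed.

Lemma lipschitz_ball_bound n (F : (nat -> R) -> R) z0 r L :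
  0 < r -> 0 <= L ->
  (forall z w, close n r z z0 -> close n r w z0 -> Rabs (F z - F w) <= L * dist1 n z w) ->
  forall z, close n r z z0 -> Rabs (F z) <= Rabs (F z0) + L * (INR n * r).
Proof.
  intros Hr HL H z Hz; specialize (H z z0 Hz (close_refl n r z0 Hr)).
  pose proof (dist1_le_close n r z z0 Hz).
  pose proof (Rabs_triang (F z - F z0) (F z0)).
  replace (F z - F z0 + F z0) with (F z) in * by ring.
  assert (L * dist1 n z z0 <= L * (INR n * r)) by (apply Rmult_le_compat_l; auto).
  lra.
Qed.

Section Picard.

Variables (n : nat) (G : (nat -> R) -> nat -> R) (z0 : nat -> R) (r L M T : R).
Hypotheses (Hr : 0 < r) (HL : 0 <= L) (HM : 0 <= M) (HT : 0 < T).
Hypotheses (HMT : M * T <= r / 2) (HTL : T * (L * INR n) <= / 2).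
Hypothesis G_lipschitz : forall z w, close n r z z0 -> close n r w z0 ->
  forall k, (k < n)%nat -> Rabs (G z k - G w k) <= L * dist1 n z w.
Hypothesis G_bounded : forall z, close n r z z0 -> forall k, (k < n)%nat -> Rabs (G z k) <= M.

Definition picard_admissible (z : R -> nat -> R) :=
  (forall t k, (k < n)%nat -> Rabs (z t k - z0 k) <= M * T) /\
  (forall t t' k, (k < n)%nat -> Rabs (z t k - z t' k) <= M * Rabs (t - t')).

Lemma admissible_close z : picard_admissible z -> forall t, close n r (z t) z0.
Proof. intros [Hz _] t j Hj; specialize (Hz t j Hj); lra. Qed.

Lemma admissible_continuous z k :
  picard_admissible z -> (k < n)%nat -> forall s, continuous (fun t => G (z t) k) s.
Proof.
  intros Hz Hk s; apply continuous_of_lipschitz_at with (L * (INR n * M)); intros t.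
  eapply Rle_trans; [apply G_lipschitz; auto; apply admissible_close; auto|].
  replace (L * (INR n * M) * Rabs (t - s)) with (L * (INR n * (M * Rabs (t - s)))) by ring.
  apply Rmult_le_compat_l; auto; apply sum_lt_le_const; intros j Hj; apply (proj2 Hz); auto.
Qed.

(* Clamping the upper limit of integration to [0, T] makes every iterate admissible
   at all times, not only on [0, T]. *)
Fixpoint picard (m : nat) : R -> nat -> R :=
  match m with
  | O => fun _ k => z0 k
  | S m' => fun t k => z0 k + RInt (fun s => G (picard m' s) k) 0 (clamp T t)
  end.

Lemma picard_is_admissible m : picard_admissible (picard m).
Proof.
  induction m as [|m IH]; simpl.
  - split; intros; rewrite Rminus_diag, Rabs_R0; [nra|].
    pose proof (Rabs_pos (t - t')); nra.
  - assert (Bd : forall k s, (k < n)%nat -> Rabs (G (picard m s) k) <= M)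
      by (intros; apply G_bounded; auto; apply admissible_close; auto).
    split.
    + intros t k Hk; rewrite Rplus_minus_l.
      eapply Rle_trans; [apply RInt_0_le; auto; apply admissible_continuous; auto|].
      pose proof (clamp_in T t ltac:(lra)); rewrite Rabs_pos_eq by lra; nra.
    + intros t t' k Hk.
      replace (z0 k + _ - _) with (RInt (fun s => G (picard m s) k) 0 (clamp T t)
                                   - RInt (fun s => G (picard m s) k) 0 (clamp T t')) by ring.
      eapply Rle_trans; [apply RInt_diff_le; auto; apply admissible_continuous; auto|].
      apply Rmult_le_compat_l; auto; apply clamp_lipschitz; lra.
Qed.

Lemma picard_S m t k :
  picard (S m) t k = z0 k + RInt (fun s => G (picard m s) k) 0 (clamp T t).
Proof. reflexivity. Qed.

Lemma RInt_clamp_contraction (f g : R -> R) t X :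
  (forall s, continuous f s) -> (forall s, continuous g s) -> 0 <= X ->
  (forall s, Rabs (f s - g s) <= L * (INR n * X)) ->
  Rabs (RInt f 0 (clamp T t) - RInt g 0 (clamp T t)) <= / 2 * X.
Proof.
  intros Hf Hg HX Hfg; rewrite <- RInt_minus_continuous by auto.
  eapply Rle_trans; [apply RInt_0_le; [|exact Hfg]|].
  { intros s; apply (continuous_minus f g); auto. }
  pose proof (clamp_in T t ltac:(lra)); rewrite Rabs_pos_eq by lra.
  assert (0 <= L * INR n) by (apply Rmult_le_pos; [auto | apply pos_INR]).
  assert (clamp T t * (L * INR n) <= / 2) by nra.
  replace (L * (INR n * X) * clamp T t) with (clamp T t * (L * INR n) * X) by ring.
  apply Rmult_le_compat_r; auto.
Qed.

Lemma picard_step m t k : (k < n)%nat ->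
  Rabs (picard (S m) t k - picard m t k) <= M * T * (/2)^m.
Proof.
  revert t k; induction m as [|m IH]; intros t k Hk.
  - simpl pow; rewrite Rmult_1_r; apply (proj1 (picard_is_admissible 1)); auto.
  - rewrite !picard_S.
    replace (z0 k + _ - (z0 k + _))
      with (RInt (fun s => G (picard (S m) s) k) 0 (clamp T t)
            - RInt (fun s => G (picard m s) k) 0 (clamp T t)) by ring.
    simpl pow; replace (M * T * (/ 2 * (/ 2) ^ m)) with (/ 2 * (M * T * (/ 2) ^ m)) by ring.
    pose proof (half_pow_pos m).
    apply RInt_clamp_contraction; try (apply admissible_continuous; auto; apply picard_is_admissible).
    + apply Rmult_le_pos; nra.
    + intros s; eapply Rle_trans;
        [apply G_lipschitz; auto; apply admissible_close, picard_is_admissible|].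
      apply Rmult_le_compat_l; auto; apply sum_lt_le_const; intros j Hj; apply IH; auto.
Qed.

Definition picard_lim (t : R) (k : nat) : R := seq_lim (fun m => picard m t k).

Lemma picard_lim_approx t k m : (k < n)%nat ->
  Rabs (picard_lim t k - picard m t k) <= 2 * (M * T) * (/2)^m.
Proof. intros Hk; apply (seq_lim_geom (fun m => picard m t k)); intros; apply picard_step, Hk. Qed.

Lemma picard_lim_is_admissible : picard_admissible picard_lim.
Proof.
  split.
  - intros t k Hk; apply le_of_le_geom with (2 * (M * T)); intros m.
    pose proof (picard_lim_approx t k m Hk); pose proof (proj1 (picard_is_admissible m) t k Hk).
    pose proof (Rabs_triang3 (picard_lim t k) (picard m t k) (z0 k) (z0 k)).
    rewrite Rminus_diag, Rabs_R0 in *; lra.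
  - intros t t' k Hk; apply le_of_le_geom with (4 * (M * T)); intros m.
    pose proof (picard_lim_approx t k m Hk); pose proof (picard_lim_approx t' k m Hk).
    pose proof (proj2 (picard_is_admissible m) t t' k Hk).
    pose proof (Rabs_triang3 (picard_lim t k) (picard m t k) (picard m t' k) (picard_lim t' k)).
    rewrite (Rabs_minus_sym (picard m t' k)) in *; lra.
Qed.

Lemma picard_lim_fixpoint t k : (k < n)%nat ->
  picard_lim t k = z0 k + RInt (fun s => G (picard_lim s) k) 0 (clamp T t).
Proof.
  intros Hk; set (I := RInt (fun s => G (picard_lim s) k) 0 (clamp T t)).
  enough (H : Rabs (picard_lim t k - (z0 k + I)) = 0) by (apply Rabs_eq_0 in H; lra).
  apply eq0_of_le_geom with (2 * (M * T)); [apply Rabs_pos|]; intros m.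
  pose proof (picard_lim_approx t k (S m) Hk) as A1; simpl pow in A1.
  assert (A2 : Rabs (picard (S m) t k - (z0 k + I)) <= M * T * (/2)^m).
  { rewrite picard_S; unfold I.
    replace (z0 k + _ - (z0 k + _))
      with (RInt (fun s => G (picard m s) k) 0 (clamp T t)
            - RInt (fun s => G (picard_lim s) k) 0 (clamp T t)) by ring.
    replace (M * T * (/ 2) ^ m) with (/ 2 * (2 * (M * T) * (/ 2) ^ m)) by field.
    pose proof (half_pow_pos m).
    apply RInt_clamp_contraction;
      try (apply admissible_continuous; auto using picard_is_admissible, picard_lim_is_admissible).
    + apply Rmult_le_pos; nra.
    + intros s; eapply Rle_trans; [apply G_lipschitz; auto; apply admissible_close;
        auto using picard_is_admissible, picard_lim_is_admissible|].
      apply Rmult_le_compat_l; auto; apply sum_lt_le_const; intros j Hj.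
      rewrite Rabs_minus_sym; apply picard_lim_approx; auto. }
  pose proof (Rabs_triang3 (picard_lim t k) (picard (S m) t k) (z0 k + I) (z0 k + I)).
  rewrite Rminus_diag, Rabs_R0 in *; lra.
Qed.

Lemma picard_lim_solution :
  (forall k, (k < n)%nat -> picard_lim 0 k = z0 k) /\
  forall t, 0 <= t <= T -> forall k, (k < n)%nat ->
    deriv_within T (fun t => picard_lim t k) t (G (picard_lim t) k).
Proof.
  split.
  - intros k Hk; rewrite picard_lim_fixpoint, clamp_id, RInt_point by (auto; lra).
    change (zero : R) with 0; ring.
  - intros t Ht k Hk.
    pose proof (admissible_continuous _ k picard_lim_is_admissible Hk) as Hc.
    set (F := fun b => RInt (fun s => G (picard_lim s) k) 0 b).
    assert (HF : is_derive F t (G (picard_lim t) k)).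
    { apply (is_derive_RInt (fun s => G (picard_lim s) k) F 0 t); [|apply Hc].
      apply filter_forall; intros b; apply (@RInt_correct R_CompleteNormedModule).
      apply ex_RInt_continuous_everywhere, Hc. }
    apply is_derive_Reals in HF.
    intros eps He; destruct (HF eps He) as [del Hdel]; exists del; split; [apply cond_pos|].
    intros t' Ht' Htt Hd.
    rewrite (picard_lim_fixpoint t' k Hk), (picard_lim_fixpoint t k Hk), !clamp_id by lra.
    specialize (Hdel (t' - t) ltac:(lra) Hd); replace (t + (t' - t)) with t' in Hdel by ring.
    replace (z0 k + _ - (z0 k + _)) with (F t' - F t) by (unfold F; ring); exact Hdel.
Qed.

End Picard.

Theorem ode_local_existence n (G : (nat -> R) -> nat -> R) z0 :
  (forall k, (k < n)%nat -> loc_lipschitz n (fun z => G z k)) ->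
  exists T z, 0 < T /\ (forall k, (k < n)%nat -> z 0 k = z0 k) /\
    forall t, 0 <= t <= T -> forall k, (k < n)%nat ->
      deriv_within T (fun t => z t k) t (G (z t) k).
Proof.
  intros HG; destruct (loc_lipschitz_uniform n n G z0 HG) as (r & L & Hr & HL & Hlip).
  set (M := sum_lt n (fun k => Rabs (G z0 k)) + L * (INR n * r) + 1).
  assert (HLn : 0 <= L * INR n) by (apply Rmult_le_pos; [auto | apply pos_INR]).
  assert (HM : 1 <= M).
  { assert (0 <= sum_lt n (fun k => Rabs (G z0 k))) by (apply sum_lt_ge0; intros; apply Rabs_pos).
    unfold M; nra. }
  assert (Hbound : forall z, close n r z z0 -> forall k, (k < n)%nat -> Rabs (G z k) <= M).
  { intros z Hz k Hk.
    pose proof (lipschitz_ball_bound n (fun z => G z k) z0 r L Hr HL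
                  (fun z w Hz Hw => Hlip z w Hz Hw k Hk) z Hz).
    pose proof (le_sum_lt n (fun k => Rabs (G z0 k)) k ltac:(intros; apply Rabs_pos) Hk).
    unfold M; simpl in *; lra. }
  set (T := Rmin (r / (2 * M)) (/ (2 * (L * INR n + 1)))).
  assert (HT : 0 < T) by (apply Rmin_pos; [apply Rdiv_lt_0_compat | apply Rinv_0_lt_compat]; lra).
  assert (HMT : M * T <= r / 2).
  { apply Rle_trans with (M * (r / (2 * M))); [apply Rmult_le_compat_l; [lra | apply Rmin_l]|].
    right; field; lra. }
  assert (HTL : T * (L * INR n) <= / 2).
  { apply Rle_trans with (/ (2 * (L * INR n + 1)) * (L * INR n + 1)).
    - apply Rmult_le_compat; try lra; apply Rmin_r.
    - right; field; lra. }
  exists T, (picard_lim G z0 T); split; auto.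
  apply (picard_lim_solution n G z0 r L M T); auto; lra.
Qed.

Lemma close_near_start n T (z : R -> nat -> R) (d : nat -> R) r :
  0 < r -> (forall k, (k < n)%nat -> deriv_within T (fun t => z t k) 0 (d k)) ->
  exists del, 0 < del /\ forall t, 0 <= t <= T -> t < del -> close n r (z t) (z 0).
Proof.
  intros Hr Hd.
  destruct (uniform_constants n (fun k del _ => forall t, 0 <= t <= T -> t < del ->
              Rabs (z t k - z 0 k) < r)) as (del & _ & Hdel & _ & H).
  - intros k d1 d2 L L' Hd12 _ _ Hk t Ht Htd; apply Hk; auto; lra.
  - intros k Hk; destruct (deriv_within_continuous T _ 0 _ (Hd k Hk) r Hr) as (d1 & Hd1 & H).
    exists d1, 0; repeat split; auto; [lra|]; intros t Ht Htd.
    apply H; auto; rewrite Rminus_0_r, Rabs_pos_eq; lra.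
  - exists del; split; auto; intros t Ht Htd k Hk; apply H; auto.
Qed.

Lemma ode_contraction n (G : (nat -> R) -> nat -> R) z0 r L h (z1 z2 : R -> nat -> R) B :
  0 < h -> 0 <= L -> h * (L * INR n) <= / 2 ->
  (forall z w, close n r z z0 -> close n r w z0 ->
     forall k, (k < n)%nat -> Rabs (G z k - G w k) <= L * dist1 n z w) ->
  (forall k, (k < n)%nat -> z1 0 k = z2 0 k) ->
  (forall t, 0 <= t <= h -> close n r (z1 t) z0 /\ close n r (z2 t) z0) ->
  (forall t, 0 <= t <= h -> forall k, (k < n)%nat ->
     deriv_within h (fun t => z1 t k) t (G (z1 t) k) /\
     deriv_within h (fun t => z2 t k) t (G (z2 t) k)) ->
  (forall t, 0 <= t <= h -> dist1 n (z1 t) (z2 t) <= B) ->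
  forall t, 0 <= t <= h -> dist1 n (z1 t) (z2 t) <= / 2 * B.
Proof.
  intros Hh HL HhL Hlip H0 Hclose Hd HB t Ht.
  assert (HB0 : 0 <= B) by (eapply Rle_trans; [apply dist1_ge0 | apply (HB 0); lra]).
  assert (Hk : forall k, (k < n)%nat -> Rabs (z1 t k - z2 t k) <= L * B * h).
  { intros k Hk.
    replace (z1 t k - z2 t k) with (z1 t k - z2 t k - (z1 0 k - z2 0 k)) by (rewrite H0 by auto; ring).
    eapply Rle_trans.
    - apply (mean_value_ineq h (fun t => z1 t k - z2 t k)
               (fun s => G (z1 s) k - G (z2 s) k) (L * B)); auto.
      + intros s Hs; apply deriv_within_minus; apply Hd; auto.
      + intros s Hs; destruct (Hclose s Hs); eapply Rle_trans; [apply Hlip; auto|].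
        apply Rmult_le_compat_l; auto.
    - apply Rmult_le_compat_l; [apply Rmult_le_pos|]; lra. }
  eapply Rle_trans; [apply sum_lt_le_const; exact Hk|].
  replace (INR n * (L * B * h)) with (h * (L * INR n) * B) by ring.
  apply Rmult_le_compat_r; auto.
Qed.

Lemma ode_unique_near_start n (G : (nat -> R) -> nat -> R) z0 r L h (z1 z2 : R -> nat -> R) :
  0 < h -> 0 <= L -> h * (L * INR n) <= / 2 ->
  (forall z w, close n r z z0 -> close n r w z0 ->
     forall k, (k < n)%nat -> Rabs (G z k - G w k) <= L * dist1 n z w) ->
  (forall k, (k < n)%nat -> z1 0 k = z2 0 k) ->
  (forall t, 0 <= t <= h -> close n r (z1 t) z0 /\ close n r (z2 t) z0) ->
  (forall t, 0 <= t <= h -> forall k, (k < n)%nat ->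
     deriv_within h (fun t => z1 t k) t (G (z1 t) k) /\
     deriv_within h (fun t => z2 t k) t (G (z2 t) k)) ->
  forall t, 0 <= t <= h -> forall k, (k < n)%nat -> z1 t k = z2 t k.
Proof.
  intros Hh HL HhL Hlip H0 Hclose Hd.
  set (B := INR n * (2 * r)).
  assert (Hgeom : forall j t, 0 <= t <= h -> dist1 n (z1 t) (z2 t) <= B * (/2)^j).
  { induction j as [|j IH]; intros t Ht.
    - rewrite pow_O, Rmult_1_r; apply sum_lt_le_const; intros k Hk.
      destruct (Hclose t Ht) as [C1 C2]; specialize (C1 k Hk); specialize (C2 k Hk).
      pose proof (Rabs_triang3 (z1 t k) (z0 k) (z0 k) (z2 t k)).
      rewrite Rminus_diag, Rabs_R0, (Rabs_minus_sym (z0 k)) in *; lra.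
    - replace (B * (/2)^(S j)) with (/2 * (B * (/2)^j)) by (simpl; ring).
      apply (ode_contraction n G z0 r L h z1 z2); auto. }
  intros t Ht k Hk.
  assert (Hd0 : dist1 n (z1 t) (z2 t) = 0)
    by (apply eq0_of_le_geom with B; [apply dist1_ge0 | intros; apply Hgeom; auto]).
  pose proof (Rabs_le_dist1 n (z1 t) (z2 t) k Hk); pose proof (Rabs_pos (z1 t k - z2 t k)).
  assert (HZ : Rabs (z1 t k - z2 t k) = 0) by lra; apply Rabs_eq_0 in HZ; lra.
Qed.

Theorem ode_local_uniqueness n (G : (nat -> R) -> nat -> R) T1 T2 (z1 z2 : R -> nat -> R) :
  (forall k, (k < n)%nat -> loc_lipschitz n (fun z => G z k)) -> 0 < T1 -> 0 < T2 ->
  (forall k, (k < n)%nat -> z1 0 k = z2 0 k) ->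
  (forall t, 0 <= t <= T1 -> forall k, (k < n)%nat ->
     deriv_within T1 (fun t => z1 t k) t (G (z1 t) k)) ->
  (forall t, 0 <= t <= T2 -> forall k, (k < n)%nat ->
     deriv_within T2 (fun t => z2 t k) t (G (z2 t) k)) ->
  exists h, 0 < h /\ h <= T1 /\ h <= T2 /\
    forall t, 0 <= t <= h -> forall k, (k < n)%nat -> z1 t k = z2 t k.
Proof.
  intros HG HT1 HT2 H0 Hd1 Hd2.
  destruct (loc_lipschitz_uniform n n G (z1 0) HG) as (r & L & Hr & HL & Hlip).
  destruct (close_near_start n T1 z1 (G (z1 0)) r Hr) as (d1 & Hd1p & N1);
    [intros k Hk; apply Hd1; auto; lra|].
  destruct (close_near_start n T2 z2 (G (z2 0)) r Hr) as (d2 & Hd2p & N2);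
    [intros k Hk; apply Hd2; auto; lra|].
  assert (HLn : 0 <= L * INR n) by (apply Rmult_le_pos; [auto | apply pos_INR]).
  set (c := / (2 * (L * INR n + 1))).
  assert (Hc : 0 < c) by (apply Rinv_0_lt_compat; lra).
  set (h := Rmin (Rmin (d1 / 2) (d2 / 2)) (Rmin (Rmin T1 T2) c)).
  assert (Hh : 0 < h) by (repeat apply Rmin_pos; lra).
  assert (Hbounds : h < d1 /\ h < d2 /\ h <= T1 /\ h <= T2 /\ h <= c).
  { unfold h.
    pose proof (Rmin_l (Rmin (d1 / 2) (d2 / 2)) (Rmin (Rmin T1 T2) c)).
    pose proof (Rmin_r (Rmin (d1 / 2) (d2 / 2)) (Rmin (Rmin T1 T2) c)).
    pose proof (Rmin_l (d1 / 2) (d2 / 2)); pose proof (Rmin_r (d1 / 2) (d2 / 2)).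
    pose proof (Rmin_l (Rmin T1 T2) c); pose proof (Rmin_r (Rmin T1 T2) c).
    pose proof (Rmin_l T1 T2); pose proof (Rmin_r T1 T2).
    repeat split; lra. }
  destruct Hbounds as (Hhd1 & Hhd2 & HhT1 & HhT2 & Hhc).
  exists h; repeat split; try lra.
  apply (ode_unique_near_start n G (z1 0) r L h z1 z2); auto.
  - apply Rle_trans with (c * (L * INR n + 1)); [apply Rmult_le_compat; lra|].
    right; unfold c; field; lra.
  - intros t Ht; split; [apply N1; lra|].
    intros j Hj; rewrite H0 by auto; apply N2; auto; lra.
  - intros t Ht k Hk; split.
    + apply deriv_within_restrict with T1; [lra | apply Hd1; auto; lra].
    + apply deriv_within_restrict with T2; [lra | apply Hd2; auto; lra].
Qed.

(** * Continuously differentiable functions and terms are locally Lipschitz *)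

Lemma upd_upd v i a b : upd (upd v i a) i b = upd v i b.
Proof. apply functional_extensionality; intros j; unfold upd; destruct (Nat.eqb j i); auto. Qed.

Lemma upd_id v i : upd v i (v i) = v.
Proof.
  apply functional_extensionality; intros j; unfold upd.
  destruct (Nat.eqb_spec j i); subst; auto.
Qed.

Lemma upd_eq v i a : upd v i a i = a.
Proof. unfold upd; rewrite Nat.eqb_refl; auto. Qed.

Lemma C1_partial_lipschitz ar g i u0 : Cn ar 1 g -> (i < ar)%nat ->
  exists del K, 0 < del /\ 0 <= K /\ forall w x, close ar del w u0 -> Rabs (x - u0 i) < del ->
    Rabs (g (upd w i x) - g w) <= K * Rabs (x - w i).
Proof.
  intros [_ Hd] Hi; destruct (Hd i Hi) as (dg & Hpd & Hc0 & _).
  destruct (Hc0 u0 1 ltac:(lra)) as (del & Hdel & Hc).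
  exists del, (Rabs (dg u0) + 1); split; auto; split; [pose proof (Rabs_pos (dg u0)); lra|].
  intros w x Hw Hx; set (phi := fun t => g (upd w i t)).
  assert (Hder : forall t, derivable_pt_lim phi t (dg (upd w i t))).
  { intros t eps He; destruct (Hpd (upd w i t) eps He) as (d & Hd0 & Hp).
    exists (mkposreal d Hd0); intros h Hh Hhd; unfold phi.
    specialize (Hp h Hh Hhd); rewrite upd_eq, upd_upd in Hp; auto. }
  destruct (MVT_gen phi (w i) x (fun t => dg (upd w i t))) as (c & Hcb & E).
  - intros t _; apply is_derive_Reals, Hder.
  - intros t _; apply derivable_continuous_pt; exists (dg (upd w i t)); apply Hder.
  - unfold phi in E; rewrite upd_id in E; rewrite E, Rabs_mult.
    apply Rmult_le_compat_r; [apply Rabs_pos|].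
    assert (Hn : forall j, (j < ar)%nat -> Rabs (upd w i c j - u0 j) < del).
    { intros j Hj; unfold upd; destruct (Nat.eqb_spec j i) as [->|]; [|apply Hw; auto].
      specialize (Hw i Hj); apply Rabs_lt_between in Hw, Hx; apply Rabs_lt_between.
      unfold Rmin, Rmax in Hcb; destruct Rle_dec; lra. }
    specialize (Hc _ Hn); pose proof (Rabs_triang (dg (upd w i c) - dg u0) (dg u0)).
    replace (dg (upd w i c) - dg u0 + dg u0) with (dg (upd w i c)) in * by ring; lra.
Qed.

(* Walk from [u] to [u'] one coordinate at a time, through the points that agree with
   [u'] below index [j] and with [u] from [j] on. *)
Lemma lipschitz_of_partial n (g : (nat -> R) -> R) u0 del K :
  depends_only_on n g ->
  (forall i w x, (i < n)%nat -> close n del w u0 -> Rabs (x - u0 i) < del ->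
     Rabs (g (upd w i x) - g w) <= K * Rabs (x - w i)) ->
  forall u u', close n del u u0 -> close n del u' u0 -> Rabs (g u - g u') <= K * dist1 n u u'.
Proof.
  intros Hdep H u u' Hu Hu'.
  set (mix := fun j i => if (i <? j)%nat then u' i else u i).
  assert (Hmix : forall j, (j <= n)%nat ->
            Rabs (g u - g (mix j)) <= K * sum_lt j (fun i => Rabs (u i - u' i))).
  { induction j as [|j IH]; intros Hj.
    - replace (mix 0%nat) with u; [simpl; rewrite Rminus_diag, Rabs_R0; lra|].
      apply functional_extensionality; intros i; unfold mix; destruct (Nat.ltb_spec i 0); auto; lia.
    - assert (E : mix (S j) = upd (mix j) j (u' j)).
      { apply functional_extensionality; intros i; unfold mix, upd.
        destruct (Nat.eqb_spec i j) as [->|]; [destruct (Nat.ltb_spec j (S j)); auto; lia|].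
        destruct (Nat.ltb_spec i (S j)), (Nat.ltb_spec i j); auto; lia. }
      assert (Hn : close n del (mix j) u0) by (intros i Hi; unfold mix; destruct (i <? j)%nat; auto).
      assert (Ej : mix j j = u j) by (unfold mix; destruct (Nat.ltb_spec j j); auto; lia).
      specialize (H j (mix j) (u' j) ltac:(lia) Hn (Hu' j ltac:(lia))).
      rewrite <- E, Ej, (Rabs_minus_sym (u' j)) in H.
      specialize (IH ltac:(lia)); cbn [sum_lt].
      pose proof (Rabs_triang3 (g u) (g (mix j)) (g (mix j)) (g (mix (S j)))).
      rewrite Rminus_diag, Rabs_R0, (Rabs_minus_sym (g (mix j))) in *; lra. }
  replace (g u') with (g (mix n)); [apply Hmix; lia|].
  apply Hdep; intros i Hi; unfold mix; destruct (Nat.ltb_spec i n); auto; lia.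
Qed.

Lemma C1_loc_lipschitz ar g : depends_only_on ar g -> Cn ar 1 g -> loc_lipschitz ar g.
Proof.
  intros Hdep HC u0.
  destruct (uniform_constants ar (fun i del K => forall w x, close ar del w u0 ->
              Rabs (x - u0 i) < del -> Rabs (g (upd w i x) - g w) <= K * Rabs (x - w i)))
    as (del & K & Hdel & HK & H).
  - intros i r r' L L' Hr HL Hr' HP w x Hw Hx; eapply Rle_trans.
    + apply HP; [eapply close_weaken; [|exact Hw]|]; auto; lra.
    + apply Rmult_le_compat_r; auto; apply Rabs_pos.
  - intros i Hi; apply C1_partial_lipschitz; auto.
  - exists del, K; repeat split; auto.
    apply (lipschitz_of_partial ar g u0 del K Hdep); intros i w x Hi; apply H, Hi.
Qed.

Lemma loc_lipschitz_const n c : loc_lipschitz n (fun _ => c).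
Proof.
  intros z0; exists 1, 0; repeat split; try lra; intros.
  rewrite Rminus_diag, Rabs_R0; lra.
Qed.

Lemma loc_lipschitz_ext n F F' :
  (forall z, F z = F' z) -> loc_lipschitz n F -> loc_lipschitz n F'.
Proof.
  intros E H z0; destruct (H z0) as (r & L & Hr & HL & H1).
  exists r, L; repeat split; auto; intros; rewrite <- !E; auto.
Qed.

Lemma loc_lipschitz_coord n k : (k < n)%nat -> loc_lipschitz n (fun z => z k).
Proof.
  intros Hk z0; exists 1, 1; repeat split; try lra; intros.
  rewrite Rmult_1_l; apply Rabs_le_dist1, Hk.
Qed.

Lemma loc_lipschitz_plus n F1 F2 :
  loc_lipschitz n F1 -> loc_lipschitz n F2 -> loc_lipschitz n (fun z => F1 z + F2 z).
Proof.
  intros H1 H2 z0.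
  (* Viewing [(F1, F2)] as one map with two components yields common constants. *)
  destruct (loc_lipschitz_uniform n 2 (fun z i => if (i =? 0)%nat then F1 z else F2 z) z0)
    as (r & L & Hr & HL & K).
  { intros [|[|i]] Hi; simpl; auto; lia. }
  exists r, (L + L); repeat split; auto; [lra|]; intros z w Hz Hw.
  pose proof (K z w Hz Hw 0%nat ltac:(lia)); pose proof (K z w Hz Hw 1%nat ltac:(lia)).
  simpl in *; pose proof (Rabs_triang (F1 z - F1 w) (F2 z - F2 w)).
  replace (F1 z - F1 w + (F2 z - F2 w)) with (F1 z + F2 z - (F1 w + F2 w)) in * by ring; lra.
Qed.

Lemma loc_lipschitz_mult n F1 F2 :
  loc_lipschitz n F1 -> loc_lipschitz n F2 -> loc_lipschitz n (fun z => F1 z * F2 z).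
Proof.
  intros H1 H2 z0.
  destruct (loc_lipschitz_uniform n 2 (fun z i => if (i =? 0)%nat then F1 z else F2 z) z0)
    as (r & L & Hr & HL & K).
  { intros [|[|i]] Hi; simpl; auto; lia. }
  assert (K1 := fun z w Hz Hw => K z w Hz Hw 0%nat ltac:(lia)).
  assert (K2 := fun z w Hz Hw => K z w Hz Hw 1%nat ltac:(lia)); simpl in K1, K2.
  set (B1 := Rabs (F1 z0) + L * (INR n * r)); set (B2 := Rabs (F2 z0) + L * (INR n * r)).
  assert (HB : 0 <= L * (INR n * r)) by (apply Rmult_le_pos; [|apply Rmult_le_pos; [apply pos_INR|]]; lra).
  assert (0 <= B1) by (unfold B1; pose proof (Rabs_pos (F1 z0)); lra).
  assert (0 <= B2) by (unfold B2; pose proof (Rabs_pos (F2 z0)); lra).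
  exists r, (B1 * L + B2 * L); repeat split; auto; [apply Rplus_le_le_0_compat; apply Rmult_le_pos; auto|].
  intros z w Hz Hw.
  pose proof (lipschitz_ball_bound n F1 z0 r L Hr HL K1 z Hz) as b1.
  pose proof (lipschitz_ball_bound n F2 z0 r L Hr HL K2 w Hw) as b2.
  fold B1 in b1; fold B2 in b2.
  replace (F1 z * F2 z - F1 w * F2 w) with (F1 z * (F2 z - F2 w) + F2 w * (F1 z - F1 w)) by ring.
  eapply Rle_trans; [apply Rabs_triang|]; rewrite !Rabs_mult.
  specialize (K1 z w Hz Hw); specialize (K2 z w Hz Hw).
  pose proof (Rabs_pos (F1 z)); pose proof (Rabs_pos (F2 w)).
  pose proof (Rabs_pos (F2 z - F2 w)); pose proof (Rabs_pos (F1 z - F1 w)).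
  assert (Rabs (F1 z) * Rabs (F2 z - F2 w) <= B1 * (L * dist1 n z w)) by (apply Rmult_le_compat; auto).
  assert (Rabs (F2 w) * Rabs (F1 z - F1 w) <= B2 * (L * dist1 n z w)) by (apply Rmult_le_compat; auto).
  lra.
Qed.

Lemma loc_lipschitz_comp n ar (H : (nat -> R) -> R) (U : (nat -> R) -> nat -> R) m :
  loc_lipschitz ar H ->
  (forall i, (i < m)%nat -> loc_lipschitz n (fun z => U z i)) ->
  (forall i z, (m <= i)%nat -> U z i = 0) ->
  loc_lipschitz n (fun z => H (U z)).
Proof.
  intros HH HU HU0 z0.
  destruct (loc_lipschitz_uniform n m U z0 HU) as (r & L & Hr & HL & K).
  assert (K' : forall i z w, close n r z z0 -> close n r w z0 ->
                 Rabs (U z i - U w i) <= L * dist1 n z w).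
  { intros i z w Hz Hw; destruct (Nat.lt_ge_cases i m); [apply K; auto|].
    rewrite !HU0, Rminus_diag, Rabs_R0 by auto; apply Rmult_le_pos; [auto | apply dist1_ge0]. }
  destruct (HH (U z0)) as (rho & KH & Hrho & HKH & KK).
  assert (HLn : 0 <= L * INR n) by (apply Rmult_le_pos; [auto | apply pos_INR]).
  set (r' := Rmin r (rho / (2 * (L * INR n + 1)))).
  assert (Hr' : 0 < r') by (apply Rmin_pos; auto; apply Rdiv_lt_0_compat; lra).
  assert (Hr'r : r' <= r) by apply Rmin_l.
  assert (Hr'rho : (L * INR n + 1) * r' <= rho / 2).
  { apply Rle_trans with ((L * INR n + 1) * (rho / (2 * (L * INR n + 1)))).
    - apply Rmult_le_compat_l; [lra | apply Rmin_r].
    - right; field; lra. }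
  assert (Hin : forall z, close n r' z z0 -> close ar rho (U z) (U z0)).
  { intros z Hz i _.
    eapply Rle_lt_trans; [apply K'; [eapply close_weaken|apply close_refl]; eauto|].
    pose proof (dist1_le_close n r' z z0 Hz).
    apply Rle_lt_trans with (L * (INR n * r')); [apply Rmult_le_compat_l; auto | nra]. }
  exists r', (KH * (INR ar * L)); repeat split; auto.
  { apply Rmult_le_pos; auto; apply Rmult_le_pos; [apply pos_INR | auto]. }
  intros z w Hz Hw; eapply Rle_trans; [apply KK; auto|].
  replace (KH * (INR ar * L) * dist1 n z w) with (KH * (INR ar * (L * dist1 n z w))) by ring.
  apply Rmult_le_compat_l; auto; apply sum_lt_le_const; intros i _.
  apply K'; eapply close_weaken; eauto.
Qed.

Fixpoint term_nested_ind {Sym : Type} (P : term Sym -> Prop)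
  (fV : forall v, P (TVar Sym v)) (fC : forall q, P (TConst Sym q))
  (fP : forall a b, P a -> P b -> P (TPlus a b))
  (fT : forall a b, P a -> P b -> P (TTimes a b))
  (fF : forall (s : Sym) (args : list (term Sym)), List.Forall P args -> P (TFn s args)) (t : term Sym) {struct t} : P t :=
  match t with
  | TVar v => fV v
  | TConst q => fC q
  | TPlus a b => fP a b (term_nested_ind P fV fC fP fT fF a) (term_nested_ind P fV fC fP fT fF b)
  | TTimes a b => fT a b (term_nested_ind P fV fC fP fT fF a) (term_nested_ind P fV fC fP fT fF b)
  | TFn s args => fF s args
      ((fix go (l : list (term Sym)) : List.Forall P l :=
          match l with
          | nil => List.Forall_nil P
          | cons a l' => List.Forall_cons a (term_nested_ind P fV fC fP fT fF a) (go l')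
          end) args)
  end.

Lemma eval_loc_lipschitz {Sym : Type} (ar : Sym -> nat) (I : Sym -> (nat -> R) -> R)
  (HI : forall s, smooth_k (ar s) (I s)) n (st : (nat -> R) -> state) :
  (forall v, (exists c, forall z, st z v = c) \/ (exists k, (k < n)%nat /\ forall z, st z v = z k)) ->
  forall t, loc_lipschitz n (fun z => eval I (st z) t).
Proof.
  intros Hst; apply term_nested_ind.
  - intros v; simpl; destruct (Hst v) as [[c Hc]|(k & Hk & Hc)].
    + eapply loc_lipschitz_ext; [|apply (loc_lipschitz_const n c)]; intros; simpl; auto.
    + eapply loc_lipschitz_ext; [|apply (loc_lipschitz_coord n k Hk)]; intros; simpl; auto.
  - intros q; simpl; apply loc_lipschitz_const.
  - intros a b Ha Hb; apply loc_lipschitz_plus; auto.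
  - intros a b Ha Hb; apply loc_lipschitz_mult; auto.
  - intros s args Hargs; simpl.
    destruct (HI s) as [Hdep Hsmooth].
    apply (loc_lipschitz_comp n (ar s) (I s) (fun z j => nth j (map (eval I (st z)) args) 0)
             (length args)).
    + apply C1_loc_lipschitz; auto.
    + intros i Hi; eapply loc_lipschitz_ext;
        [|apply (proj1 (Forall_forall _ _) Hargs (nth i args (TConst Sym 0%Q)) (nth_In _ _ Hi))].
      intros z; simpl.
      rewrite (nth_indep _ 0 (eval I (st z) (TConst Sym 0%Q))) by (rewrite length_map; auto).
      rewrite map_nth; auto.
    + intros i z Hi; apply nth_overflow; rewrite length_map; auto.
Qed.

Fixpoint set_vars (st : state) (vs : list var) (a : nat -> R) : state :=
  match vs with
  | [] => st
  | v0 :: vs' => fun v => if var_eqb v v0 then a O else set_vars st vs' (fun k => a (S k)) v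
  end.

Definition var_eq_dec (u v : var) : {u = v} + {u <> v}.
Proof. decide equality; apply Nat.eq_dec. Defined.

Lemma var_eqb_eq u v : var_eqb u v = true <-> u = v.
Proof.
  destruct u, v; simpl; split; intros H; try discriminate;
    [apply Nat.eqb_eq in H; subst; auto | injection H as ->; apply Nat.eqb_refl
    |apply Nat.eqb_eq in H; subst; auto | injection H as ->; apply Nat.eqb_refl].
Qed.

Lemma var_eqb_neq u v : u <> v -> var_eqb u v = false.
Proof. intros H; destruct (var_eqb u v) eqn:E; auto; apply var_eqb_eq in E; contradiction. Qed.

Lemma assign_set_vars st ys a v : assign st ys a v = set_vars st (map Var ys) a v.
Proof. revert a; induction ys; intros b; simpl; auto; destruct (var_eqb v (Var a)); auto. Qed.

Lemma set_vars_notin st vs a v : ~ In v vs -> set_vars st vs a v = st v.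
Proof.
  revert a; induction vs as [|u vs IH]; intros a H; simpl; auto.
  rewrite var_eqb_neq by (intros ->; apply H; left; auto).
  apply IH; intros Hc; apply H; right; auto.
Qed.

Lemma set_vars_in vs v : In v vs ->
  exists k, (k < length vs)%nat /\ nth k vs v = v /\ forall st a, set_vars st vs a v = a k.
Proof.
  induction vs as [|u vs IH]; intros H; [destruct H|]; simpl.
  destruct (var_eqb v u) eqn:E.
  - apply var_eqb_eq in E; subst; exists O; repeat split; auto; lia.
  - destruct H as [->|H]; [rewrite (proj2 (var_eqb_eq v v) eq_refl) in E; discriminate|].
    destruct (IH H) as (k & Hk & Hn & Hs); exists (S k); repeat split; auto; lia.
Qed.

Lemma set_vars_nth st vs a k d : NoDup vs -> (k < length vs)%nat ->
  set_vars st vs a (nth k vs d) = a k.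
Proof.
  revert a k; induction vs as [|u vs IH]; intros a k Hnd Hk; simpl in *; [lia|].
  inversion Hnd as [|? ? Hu Hnd']; subst; destruct k as [|k].
  - rewrite (proj2 (var_eqb_eq u u) eq_refl); auto.
  - rewrite var_eqb_neq; [apply (IH (fun j => a (S j))); auto; lia|].
    intros E; apply Hu; rewrite <- E; apply nth_In; lia.
Qed.

Lemma set_vars_agree st1 st2 vs a v : st1 v = st2 v -> set_vars st1 vs a v = set_vars st2 vs a v.
Proof.
  intros H; destruct (in_dec var_eq_dec v vs) as [Hin|Hout].
  - destruct (set_vars_in vs v Hin) as (k & _ & _ & Hs); rewrite !Hs; auto.
  - rewrite !set_vars_notin; auto.
Qed.

Lemma set_vars_const_or_coord (st : state) xs v :
  (exists c, forall z, set_vars st (map Var xs) z v = c) \/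
  (exists k, (k < length xs)%nat /\ forall z, set_vars st (map Var xs) z v = z k).
Proof.
  destruct (in_dec var_eq_dec v (map Var xs)) as [Hin|Hout].
  - right; destruct (set_vars_in _ v Hin) as (k & Hk & _ & Hs).
    rewrite length_map in Hk; exists k; split; auto.
  - left; exists (st v); intros; apply set_vars_notin; auto.
Qed.

Section Agreement.

Context {Sym : Type} (I : Sym -> (nat -> R) -> R).

Lemma eval_agree : forall t st1 st2,
  (forall v, occurs v t = true -> st1 v = st2 v) -> eval I st1 t = eval I st2 t.
Proof.
  apply (term_nested_ind (fun t => forall st1 st2,
    (forall v, occurs v t = true -> st1 v = st2 v) -> eval I st1 t = eval I st2 t)).
  - intros v st1 st2 H; simpl; apply H; simpl; apply var_eqb_eq; auto.
  - intros; reflexivity.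
  - intros a b Ha Hb st1 st2 H; simpl; rewrite (Ha st1 st2), (Hb st1 st2); auto;
      intros v Hv; apply H; simpl; rewrite Hv; auto with bool.
  - intros a b Ha Hb st1 st2 H; simpl; rewrite (Ha st1 st2), (Hb st1 st2); auto;
      intros v Hv; apply H; simpl; rewrite Hv; auto with bool.
  - intros s args Hargs st1 st2 H; simpl.
    replace (map (eval I st1) args) with (map (eval I st2) args); auto; symmetry.
    apply map_ext_in; intros a Ha.
    apply (proj1 (Forall_forall _ _) Hargs a Ha); intros v Hv.
    apply H; simpl; apply existsb_exists; exists a; auto.
Qed.

Lemma dfree_no_dvar : forall t : term Sym, dfree t = true -> forall i, occurs (DVar i) t = false.
Proof.
  apply (term_nested_ind (fun t => dfree t = true -> forall i, occurs (DVar i) t = false)).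
  - intros [i|i] H j; simpl in *; auto; discriminate.
  - intros; reflexivity.
  - intros a b Ha Hb H i; simpl in *; apply andb_prop in H as [H1 H2]; rewrite Ha, Hb; auto.
  - intros a b Ha Hb H i; simpl in *; apply andb_prop in H as [H1 H2]; rewrite Ha, Hb; auto.
  - intros s args Hargs H i; simpl in *; induction Hargs as [|a args Ha _ IH]; simpl in *; auto.
    apply andb_prop in H as [H1 H2]; rewrite Ha; auto.
Qed.

Lemma holds_agree : forall P st1 st2,
  (forall v, occurs_fml v P = true -> st1 v = st2 v) -> (holds I st1 P <-> holds I st2 P).
Proof.
  induction P as [a c b|P1 IH1 P2 IH2|P1 IH1 P2 IH2|P IH]; intros st1 st2 H; simpl in *.
  - rewrite (eval_agree a st1 st2), (eval_agree b st1 st2); [destruct c; tauto| |];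
      intros v Hv; apply H; rewrite Hv; auto with bool.
  - rewrite (IH1 st1 st2), (IH2 st1 st2); [tauto| |];
      intros v Hv; apply H; rewrite Hv; auto with bool.
  - rewrite (IH1 st1 st2), (IH2 st1 st2); [tauto| |];
      intros v Hv; apply H; rewrite Hv; auto with bool.
  - rewrite (IH st1 st2); [tauto | auto].
Qed.

Lemma semianalytic_no_dvar : forall P : fml Sym,
  semianalytic P = true -> forall i, occurs_fml (DVar i) P = false.
Proof.
  induction P; simpl; intros H i; try (apply andb_prop in H as [H1 H2]).
  - rewrite !dfree_no_dvar; auto.
  - rewrite IHP1, IHP2; auto.
  - rewrite IHP1, IHP2; auto.
  - auto.
Qed.

End Agreement.

Lemma in_map_Var i l : In (Var i) (map Var l) <-> In i l.
Proof.
  split; [|apply in_map]; intros H; apply in_map_iff in H as (j & E & Hj).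
  injection E as ->; exact Hj.
Qed.

Lemma in_map_DVar v l : In v (map DVar l) <-> is_dvar_of l v.
Proof.
  split; [intros H; apply in_map_iff in H as (j & <- & Hj); exists j; auto|].
  intros (j & Hj & ->); apply in_map, Hj.
Qed.

Lemma Var_notin_map_DVar i l : ~ In (Var i) (map DVar l).
Proof. intros H; apply in_map_iff in H as (j & E & _); discriminate. Qed.

Lemma DVar_notin_map_Var i l : ~ In (DVar i) (map Var l).
Proof. intros H; apply in_map_iff in H as (j & E & _); discriminate. Qed.

Lemma Var_not_dvar l i : ~ is_dvar_of l (Var i).
Proof. intros (j & _ & E); discriminate. Qed.

Lemma Var_notin_xs l i : ~ In i l -> ~ in_xs l (Var i).
Proof. intros H (j & Hj & [E|E]); [injection E as ->; auto | discriminate]. Qed.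

(** * Solutions of [x' = f(x) & Q] *)

Section Solutions.

Variables (Sym : Type) (ar : Sym -> nat) (I : Sym -> (nat -> R) -> R).
Variables (xs : list nat) (fs : list (term Sym)).
Hypothesis HI : forall s, smooth_k (ar s) (I s).
Hypotheses (Hxs : NoDup xs) (Hlen : length fs = length xs).
Hypothesis Hfdf : forall t, In t fs -> dfree t = true.

Definition xvar k := Var (nth k xs O).
Definition dvar k := DVar (nth k xs O).
Definition rhs k := nth k fs (TConst Sym 0%Q).

Definition is_solution (Q : state -> Prop) (om : state) (T : R) (phi : R -> state) : Prop :=
  0 <= T /\ (forall v, ~ is_dvar_of xs v -> phi 0 v = om v) /\
  forall zeta, 0 <= zeta <= T ->
    (forall k, (k < length xs)%nat -> phi zeta (dvar k) = eval I (phi zeta) (rhs k)) /\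
    Q (phi zeta) /\
    (forall v, ~ in_xs xs v -> phi zeta v = phi 0 v) /\
    (0 < T -> forall k, (k < length xs)%nat ->
       deriv_within T (fun t => phi t (xvar k)) zeta (phi zeta (dvar k))).

Lemma ode_rel_solution Q om nu :
  ode_rel I xs fs Q om nu <-> exists T phi, is_solution Q om T phi /\ phi T = nu.
Proof.
  unfold ode_rel, is_solution, xvar, dvar, rhs; split.
  - intros (T & phi & H1 & H2 & H3 & H4); exists T, phi; auto.
  - intros (T & phi & (H1 & H2 & H4) & H3); exists T, phi; auto.
Qed.

Lemma rhs_in k : (k < length xs)%nat -> In (rhs k) fs.
Proof. intros Hk; apply nth_In; lia. Qed.

Lemma eval_rhs_agree k st1 st2 : (k < length xs)%nat ->
  (forall i, occurs (Var i) (rhs k) = true -> st1 (Var i) = st2 (Var i)) ->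
  eval I st1 (rhs k) = eval I st2 (rhs k).
Proof.
  intros Hk H; apply eval_agree; intros [i|i] Hv; [apply H, Hv|].
  rewrite (dfree_no_dvar _ (Hfdf _ (rhs_in k Hk))) in Hv; discriminate.
Qed.

Lemma set_vars_xvar st z k : (k < length xs)%nat -> set_vars st (map Var xs) z (xvar k) = z k.
Proof.
  intros Hk; unfold xvar; rewrite <- (map_nth Var xs O k).
  apply set_vars_nth; [|rewrite length_map; auto].
  apply Injective_map_NoDup; auto; intros a b E; injection E; auto.
Qed.

Lemma set_vars_dvar st z k : (k < length xs)%nat -> set_vars st (map DVar xs) z (dvar k) = z k.
Proof.
  intros Hk; unfold dvar; rewrite <- (map_nth DVar xs O k).
  apply set_vars_nth; [|rewrite length_map; auto].
  apply Injective_map_NoDup; auto; intros a b E; injection E; auto.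
Qed.

Lemma xvar_or_notin i : (exists k, (k < length xs)%nat /\ Var i = xvar k) \/ ~ In i xs.
Proof.
  destruct (In_dec Nat.eq_dec i xs) as [Hi|Hi]; [left | right; auto].
  apply (In_nth xs i O) in Hi as (k & Hk & E); exists k; split; auto.
  unfold xvar; rewrite E; auto.
Qed.

Definition vfield (sg : state) (z : nat -> R) (k : nat) :=
  eval I (set_vars sg (map Var xs) z) (rhs k).

Lemma vfield_agree s1 s2 z k : (k < length xs)%nat ->
  (forall i, s1 (Var i) = s2 (Var i)) -> vfield s1 z k = vfield s2 z k.
Proof. intros Hk H; apply eval_rhs_agree; auto; intros i _; apply set_vars_agree, H. Qed.

Lemma vfield_loc_lipschitz sg k :
  (k < length xs)%nat -> loc_lipschitz (length xs) (fun z => vfield sg z k).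
Proof.
  intros Hk; apply (eval_loc_lipschitz ar I HI _ (fun z => set_vars sg (map Var xs) z)).
  intros v; apply set_vars_const_or_coord.
Qed.

Lemma solution_vfield Q om T phi t k : is_solution Q om T phi -> 0 <= t <= T ->
  (k < length xs)%nat -> phi t (dvar k) = vfield (phi 0) (fun j => phi t (xvar j)) k.
Proof.
  intros (HT & H0 & H) Ht Hk; destruct (H t Ht) as (H1 & _ & H3 & _).
  rewrite H1 by auto; apply eval_rhs_agree; auto; intros i _.
  destruct (xvar_or_notin i) as [(j & Hj & ->)|Hi]; [rewrite set_vars_xvar; auto|].
  rewrite set_vars_notin by (rewrite in_map_Var; auto); apply H3, Var_notin_xs, Hi.
Qed.

Lemma solution_exists nu : exists T phi, 0 < T /\ is_solution (fun _ => True) nu T phi.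
Proof.
  destruct (ode_local_existence (length xs) (vfield nu) (fun k => nu (xvar k))
              (fun k Hk => vfield_loc_lipschitz nu k Hk)) as (T & z & HT & Hz0 & Hd).
  set (phi := fun t => set_vars (set_vars nu (map Var xs) (z t)) (map DVar xs)
                                (fun k => vfield nu (z t) k)).
  assert (Pv : forall t i, phi t (Var i) = set_vars nu (map Var xs) (z t) (Var i))
    by (intros; apply set_vars_notin, Var_notin_map_DVar).
  assert (Px : forall t k, (k < length xs)%nat -> phi t (xvar k) = z t k)
    by (intros; unfold xvar; rewrite Pv; apply set_vars_xvar; auto).
  assert (Pother : forall t v, ~ in_xs xs v -> phi t v = nu v).
  { intros t v Hv; unfold phi; rewrite !set_vars_notin; auto.
    - intros Hc; apply Hv; apply in_map_iff in Hc as (j & <- & Hj); exists j; auto.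
    - intros Hc; apply Hv; apply in_map_iff in Hc as (j & <- & Hj); exists j; auto. }
  exists T, phi; split; auto; split; [lra | split].
  - intros [i|i] Hv.
    + rewrite Pv; destruct (xvar_or_notin i) as [(k & Hk & ->)|Hi].
      * rewrite set_vars_xvar, Hz0; auto.
      * apply set_vars_notin; rewrite in_map_Var; auto.
    + unfold phi; rewrite !set_vars_notin; auto; [apply DVar_notin_map_Var|].
      rewrite in_map_DVar; auto.
  - intros zeta Hz; split; [|split; [auto | split]].
    + intros k Hk; unfold phi at 1; rewrite set_vars_dvar by auto.
      apply eval_rhs_agree; auto; intros i _; symmetry; apply Pv.
    + intros v Hv; rewrite !Pother; auto.
    + intros _ k Hk; unfold phi at 2; rewrite set_vars_dvar by auto.
      apply deriv_within_ext with (g := fun t => z t k); [| |apply Hd]; auto.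
      intros t _; symmetry; apply Px; auto.
Qed.

Lemma solution_restrict Q om T phi T' :
  is_solution Q om T phi -> 0 <= T' <= T -> is_solution Q om T' phi.
Proof.
  intros (HT & H0 & H) HT'; split; [lra | split; auto]; intros zeta Hz.
  destruct (H zeta ltac:(lra)) as (H1 & H2 & H3 & H4); repeat split; auto.
  intros HT'0 k Hk; apply deriv_within_restrict with T; [lra | apply H4; auto; lra].
Qed.

Lemma solution_weaken (Q Q' : state -> Prop) om T phi :
  (forall t, 0 <= t <= T -> Q (phi t) -> Q' (phi t)) ->
  is_solution Q om T phi -> is_solution Q' om T phi.
Proof.
  intros HQ (HT & H0 & H); split; auto; split; auto; intros zeta Hz.
  destruct (H zeta Hz) as (H1 & H2 & H3 & H4); repeat split; auto.
Qed.

Lemma solution_shift Q om T phi s : is_solution Q om T phi -> 0 <= s <= T ->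
  is_solution Q (phi s) (T - s) (fun u => phi (s + u)).
Proof.
  intros (HT & H0 & H) Hs; split; [lra | split].
  - intros v _; rewrite Rplus_0_r; auto.
  - intros zeta Hz; destruct (H (s + zeta) ltac:(lra)) as (H1 & H2 & H3 & H4).
    repeat split; auto.
    + intros v Hv; rewrite Rplus_0_r, H3 by auto.
      destruct (H s ltac:(lra)) as (_ & _ & B3 & _); rewrite B3; auto.
    + intros HTs k Hk; apply (deriv_within_shift T (fun t => phi t (xvar k))); [lra|].
      apply H4; auto; lra.
Qed.

Definition concat (T1 : R) (phi1 phi2 : R -> state) (t : R) : state :=
  if Rle_dec t T1 then phi1 t else phi2 (t - T1).

Lemma concat_after T1 phi1 phi2 u : 0 <= u ->
  (forall i, phi2 0 (Var i) = phi1 T1 (Var i)) ->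
  forall i, concat T1 phi1 phi2 (T1 + u) (Var i) = phi2 u (Var i).
Proof.
  intros Hu H i; unfold concat; destruct Rle_dec.
  - replace u with 0 by lra; rewrite Rplus_0_r; symmetry; apply H.
  - replace (T1 + u - T1) with u by ring; reflexivity.
Qed.

Lemma solution_concat Q om T1 phi1 T2 phi2 :
  is_solution Q om T1 phi1 -> is_solution Q (phi1 T1) T2 phi2 ->
  is_solution Q om (T1 + T2) (concat T1 phi1 phi2).
Proof.
  intros (HT1 & H01 & H1) (HT2 & H02 & H2).
  set (psi := concat T1 phi1 phi2).
  assert (E1 : forall t, t <= T1 -> psi t = phi1 t)
    by (intros t Ht; unfold psi, concat; destruct Rle_dec; auto; lra).
  assert (E2 : forall t, T1 < t -> psi t = phi2 (t - T1))
    by (intros t Ht; unfold psi, concat; destruct Rle_dec; auto; lra).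
  assert (Jx : forall i, phi2 0 (Var i) = phi1 T1 (Var i)) by (intros; apply H02, Var_not_dvar).
  assert (Jd : forall k, (k < length xs)%nat -> phi2 0 (dvar k) = phi1 T1 (dvar k)).
  { intros k Hk; destruct (H2 0 ltac:(lra)) as (A & _); destruct (H1 T1 ltac:(lra)) as (B & _).
    rewrite A, B by auto; apply eval_rhs_agree; auto. }
  assert (Hfrozen : forall t, 0 <= t <= T2 -> forall v, ~ in_xs xs v -> phi2 t v = phi1 0 v).
  { intros t Ht v Hv; destruct (H2 t Ht) as (_ & _ & A & _); destruct (H1 T1 ltac:(lra)) as (_ & _ & B & _).
    rewrite A, H02, B; auto; intros (j & Hj & ->); apply Hv; exists j; auto. }
  split; [lra | split; [intros v Hv; rewrite E1 by lra; auto|]].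
  intros zeta Hz; destruct (Rle_dec zeta T1) as [Hle|Hgt].
  - rewrite (E1 zeta Hle); destruct (H1 zeta ltac:(lra)) as (A1 & A2 & A3 & A4).
    repeat split; auto; [intros v Hv; rewrite E1 by lra; auto|].
    intros HT k Hk.
    apply deriv_within_ext with (fun t => if Rle_dec t T1 then phi1 t (xvar k)
                                          else phi2 (t - T1) (xvar k)); [|lra|].
    { intros t _; unfold psi, concat; destruct Rle_dec; auto. }
    apply (deriv_within_concat T1 T2 (fun t => phi1 t (xvar k)) (fun t => phi2 t (xvar k)));
      [exact HT1 | exact HT2 | apply Jx | lra | intros; apply A4; auto |].
    intros HT2p Hge; replace zeta with T1 by lra; rewrite Rminus_diag, <- Jd by auto.
    apply H2; auto; lra.
  - rewrite (E2 zeta ltac:(lra)); destruct (H2 (zeta - T1) ltac:(lra)) as (A1 & A2 & A3 & A4).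
    repeat split; auto.
    + intros v Hv; rewrite E1 by lra; apply Hfrozen; auto; lra.
    + intros HT k Hk.
      apply deriv_within_ext with (fun t => if Rle_dec t T1 then phi1 t (xvar k)
                                            else phi2 (t - T1) (xvar k)); [|lra|].
      { intros t _; unfold psi, concat; destruct Rle_dec; auto. }
      apply (deriv_within_concat T1 T2 (fun t => phi1 t (xvar k)) (fun t => phi2 t (xvar k)));
        [exact HT1 | exact HT2 | apply Jx | lra | intros; lra | intros; apply A4; auto; lra].
Qed.

Lemma solution_unique Q1 Q2 s1 s2 T1 T2 phi1 phi2 :
  is_solution Q1 s1 T1 phi1 -> is_solution Q2 s2 T2 phi2 -> 0 < T1 -> 0 < T2 ->
  (forall i, phi1 0 (Var i) = phi2 0 (Var i)) ->
  exists h, 0 < h /\ h <= T1 /\ h <= T2 /\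
    forall t, 0 <= t <= h -> forall i, phi1 t (Var i) = phi2 t (Var i).
Proof.
  intros S1 S2 HT1 HT2 H0.
  destruct (ode_local_uniqueness (length xs) (vfield (phi1 0)) T1 T2
              (fun t k => phi1 t (xvar k)) (fun t k => phi2 t (xvar k)))
    as (h & Hh & Hh1 & Hh2 & E); auto.
  - intros k Hk; apply vfield_loc_lipschitz, Hk.
  - intros k Hk; apply H0.
  - intros t Ht k Hk; rewrite <- (solution_vfield _ _ _ _ _ _ S1 Ht Hk).
    destruct S1 as (_ & _ & S1); apply (S1 t Ht); auto.
  - intros t Ht k Hk; rewrite (vfield_agree (phi1 0) (phi2 0)), <- (solution_vfield _ _ _ _ _ _ S2 Ht Hk) by auto.
    destruct S2 as (_ & _ & S2); apply (S2 t Ht); auto.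
  - exists h; repeat split; auto; intros t Ht i.
    destruct (xvar_or_notin i) as [(k & Hk & ->)|Hi]; [apply E; auto|].
    destruct S1 as (_ & _ & S1), S2 as (_ & _ & S2).
    destruct (S1 t ltac:(lra)) as (_ & _ & A & _), (S2 t ltac:(lra)) as (_ & _ & B & _).
    rewrite A, B; auto; apply Var_notin_xs, Hi.
Qed.

Lemma solution_leaves Q sg T phi k : is_solution Q sg T phi -> 0 < T ->
  (k < length xs)%nat -> eval I sg (rhs k) <> 0 ->
  exists h, 0 < h /\ h <= T /\ forall t, 0 < t <= h -> phi t (xvar k) <> sg (xvar k).
Proof.
  intros (HT0 & H0 & H) HT Hk Hne; destruct (H 0 ltac:(lra)) as (A1 & _ & _ & A4).
  set (c := phi 0 (dvar k)).
  assert (Hc : c = eval I sg (rhs k)).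
  { unfold c; rewrite A1 by auto; apply eval_rhs_agree; auto; intros i _; apply H0, Var_not_dvar. }
  assert (Hcp : 0 < Rabs c) by (rewrite Hc; apply Rabs_pos_lt; auto).
  destruct (A4 HT k Hk (Rabs c) Hcp) as (del & Hdel & K).
  exists (Rmin (del / 2) T); split; [apply Rmin_pos; lra | split; [apply Rmin_r|]].
  intros t Ht E; pose proof (Rmin_l (del / 2) T); pose proof (Rmin_r (del / 2) T).
  specialize (K t ltac:(lra) ltac:(lra) ltac:(rewrite Rminus_0_r, Rabs_pos_eq; lra)).
  rewrite E, (H0 (xvar k) (Var_not_dvar _ _)), Rminus_diag in K.
  unfold Rdiv in K; rewrite Rmult_0_l, Rminus_0_l, Rabs_Ropp in K; fold c in K; lra.
Qed.



Lemma solution_guard Q om T phi t : is_solution Q om T phi -> 0 <= t <= T -> Q (phi t).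
Proof. intros (_ & _ & H) Ht; apply (H t Ht). Qed.

(** * Fresh copies [y] of the variables [x] *)

Section Fresh.

Variables (P : fml Sym) (ys : list nat).
Hypotheses (HP : semianalytic P = true) (Hys : NoDup ys) (Hylen : length ys = length xs).
Hypothesis Hfresh : forall y, In y ys ->
  ~ In y xs /\ (forall t, In t fs -> occurs (Var y) t = false) /\ occurs_fml (Var y) P = false.
Hypothesis Hevolve : forall st : state, exists k, (k < length xs)%nat /\ eval I st (rhs k) <> 0.

Definition guard (st : state) : Prop := holds I st P \/ vec_eq st xs ys.

Lemma assign_notin st a i : ~ In i ys -> assign st ys a (Var i) = st (Var i).
Proof. intros Hi; rewrite assign_set_vars; apply set_vars_notin; rewrite in_map_Var; auto. Qed.

Lemma assign_xvar st a k : (k < length xs)%nat -> assign st ys a (xvar k) = st (xvar k).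
Proof. intros Hk; apply assign_notin; intros Hy; apply (Hfresh _ Hy), nth_In, Hk. Qed.

Lemma assign_dvar st a k : assign st ys a (dvar k) = st (dvar k).
Proof. rewrite assign_set_vars; apply set_vars_notin, DVar_notin_map_Var. Qed.

Lemma assign_ynth st a k : (k < length ys)%nat -> assign st ys a (Var (nth k ys O)) = a k.
Proof.
  intros Hk; rewrite assign_set_vars, <- (map_nth Var ys O k).
  apply set_vars_nth; [|rewrite length_map; auto].
  apply Injective_map_NoDup; auto; intros u v E; injection E; auto.
Qed.

Lemma assign_restore om a : assign (assign om ys a) ys (fun k => om (Var (nth k ys O))) = om.
Proof.
  apply functional_extensionality; intros v; rewrite !assign_set_vars.
  destruct (in_dec var_eq_dec v (map Var ys)) as [Hin|Hout].
  - destruct (set_vars_in _ v Hin) as (k & Hk & Hn & ->); rewrite length_map in Hk.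
    rewrite (nth_indep _ v (Var O)), map_nth in Hn by (rewrite length_map; auto).
    rewrite Hn; reflexivity.
  - rewrite set_vars_notin, assign_set_vars, set_vars_notin; auto.
Qed.

Lemma eval_rhs_fresh k st1 st2 : (k < length xs)%nat ->
  (forall i, ~ In i ys -> st1 (Var i) = st2 (Var i)) -> eval I st1 (rhs k) = eval I st2 (rhs k).
Proof.
  intros Hk H; apply eval_rhs_agree; auto; intros i Hocc; apply H; intros Hy.
  rewrite (proj1 (proj2 (Hfresh i Hy)) _ (rhs_in k Hk)) in Hocc; discriminate.
Qed.

Lemma holds_fresh st1 st2 :
  (forall i, ~ In i ys -> st1 (Var i) = st2 (Var i)) -> (holds I st1 P <-> holds I st2 P).
Proof.
  intros H; apply holds_agree; intros [i|i] Hv.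
  - apply H; intros Hy; rewrite (proj2 (proj2 (Hfresh i Hy))) in Hv; discriminate.
  - rewrite (semianalytic_no_dvar _ HP) in Hv; discriminate.
Qed.

Lemma holds_assign st a : holds I (assign st ys a) P <-> holds I st P.
Proof. apply holds_fresh; intros i Hi; apply assign_notin, Hi. Qed.

Lemma solution_assign Q Q' om T phi b : is_solution Q om T phi ->
  (forall t, 0 <= t <= T -> Q' (assign (phi t) ys b)) ->
  is_solution Q' (assign om ys b) T (fun t => assign (phi t) ys b).
Proof.
  intros (HT & H0 & H) HQ; split; auto; split.
  - intros v Hv; rewrite !assign_set_vars; apply set_vars_agree; auto.
  - intros zeta Hz; destruct (H zeta Hz) as (A1 & A2 & A3 & A4).
    split; [|split; [auto | split]].
    + intros k Hk; rewrite assign_dvar, A1 by auto.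
      apply eval_rhs_fresh; auto; intros i Hi; symmetry; apply assign_notin, Hi.
    + intros v Hv; rewrite !assign_set_vars; apply set_vars_agree; auto.
    + intros HT0 k Hk; rewrite assign_dvar.
      apply deriv_within_ext with (g := fun t => phi t (xvar k)); auto.
      intros t _; symmetry; apply assign_xvar, Hk.
Qed.

Lemma solution_ynth Q sg T phi t k : is_solution Q sg T phi -> 0 <= t <= T ->
  (k < length xs)%nat -> phi t (Var (nth k ys O)) = sg (Var (nth k ys O)).
Proof.
  intros (_ & H0 & H) Ht Hk; destruct (H t Ht) as (_ & _ & A3 & _).
  rewrite A3, H0; [auto | apply Var_not_dvar|].
  apply Var_notin_xs, (Hfresh _ (nth_In ys O (ltac:(lia) : (k < length ys)%nat))).
Qed.

Lemma holds_along_assigned_solution omega a :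
  box (ode_rel I xs fs (fun _ => True)) (fun nu => holds I nu P) omega ->
  forall T psi, is_solution (fun _ => True) (assign omega ys a) T psi ->
  forall t, 0 <= t <= T -> holds I (psi t) P.
Proof.
  intros HL T psi Sp t Ht.
  set (b := fun k => omega (Var (nth k ys O))).
  assert (Sb := solution_assign _ (fun _ => True) _ _ _ b (solution_restrict _ _ _ _ _ Sp Ht)
                  (fun _ _ => Logic.I)).
  unfold b in Sb; rewrite assign_restore in Sb.
  apply (holds_assign _ b), HL, ode_rel_solution.
  exists t; eexists; split; [exact Sb | reflexivity].
Qed.

Lemma guarded_escape_exists omega a T1 phi1 :
  box (ode_rel I xs fs (fun _ => True)) (fun nu => holds I nu P) omega ->
  is_solution (fun _ => True) (assign omega ys a) T1 phi1 -> vec_eq (phi1 T1) xs ys ->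
  diamond (ode_rel I xs fs guard) (fun mu => ~ vec_eq mu xs ys) (phi1 T1).
Proof.
  intros HL S1 Hveq.
  destruct (solution_exists (phi1 T1)) as (T2 & phi2 & HT2 & S2).
  destruct (Hevolve (phi1 T1)) as (k & Hk & Hne).
  destruct (solution_leaves _ _ _ _ k S2 HT2 Hk Hne) as (h & Hh & HhT & Hleave).
  exists (phi2 h); split.
  - apply ode_rel_solution; exists h, phi2; split; auto.
    apply solution_weaken with (fun _ => True); [|apply solution_restrict with T2; auto; lra].
    intros u Hu _; left.
    assert (Sc := solution_concat _ _ _ _ _ _ S1 (solution_restrict _ _ _ _ u S2 ltac:(lra))).
    apply (holds_fresh (concat T1 phi1 phi2 (T1 + u))).
    + intros i _; apply concat_after; [lra|].
      intros j; destruct S2 as (_ & H02 & _); apply H02, Var_not_dvar.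
    + apply (holds_along_assigned_solution omega a HL _ _ Sc); destruct S1; lra.
  - intros Hv; apply (Hleave h ltac:(lra)); unfold xvar.
    rewrite (Hv k Hk), (solution_ynth _ _ _ _ h k S2) by (auto; lra).
    symmetry; apply Hveq, Hk.
Qed.

Lemma box_implies_guarded omega a :
  box (ode_rel I xs fs (fun _ => True)) (fun nu => holds I nu P) omega ->
  box (ode_rel I xs fs guard)
    (fun nu => vec_eq nu xs ys ->
       holds I nu P /\ diamond (ode_rel I xs fs guard) (fun mu => ~ vec_eq mu xs ys) nu)
    (assign omega ys a).
Proof.
  intros HL nu Hrel Hveq; apply ode_rel_solution in Hrel as (T1 & phi1 & S1 & <-).
  assert (S1' := solution_weaken guard (fun _ => True) _ _ _ (fun _ _ _ => Logic.I) S1).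
  split; [apply (holds_along_assigned_solution omega a HL T1 phi1 S1'); destruct S1; lra|].
  apply (guarded_escape_exists omega a T1 phi1 HL S1' Hveq).
Qed.

(* The solution leaves [x = y] at once, so from then on the guard can only hold through [P]. *)
Lemma guarded_solution_holds sg T chi : is_solution guard sg T chi -> vec_eq sg xs ys -> 0 < T ->
  exists h, 0 < h /\ h <= T /\ forall t, 0 < t <= h -> holds I (chi t) P.
Proof.
  intros Sc Hveq HT.
  destruct (Hevolve sg) as (k & Hk & Hne).
  destruct (solution_leaves _ _ _ _ k Sc HT Hk Hne) as (h & Hh & HhT & Hleave).
  exists h; repeat split; auto; intros t Ht.
  destruct (solution_guard _ _ _ _ t Sc ltac:(lra)) as [HPc|HVc]; auto.
  exfalso; apply (Hleave t Ht); unfold xvar.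
  rewrite (HVc k Hk), (solution_ynth _ _ _ _ t k Sc) by (auto; lra).
  symmetry; apply Hveq, Hk.
Qed.

Lemma holds_right_after omega b T phi s T2 chi :
  is_solution (fun _ => True) omega T phi -> 0 <= s < T ->
  is_solution guard (assign (phi s) ys b) T2 chi -> vec_eq (assign (phi s) ys b) xs ys ->
  0 < T2 -> exists h, 0 < h /\ forall u, s < u < s + h -> holds I (phi u) P.
Proof.
  intros S Hs Sc Veq HT2.
  assert (S' := solution_shift _ _ _ _ s
                  (solution_assign (fun _ => True) (fun _ => True) _ _ _ b S (fun _ _ => Logic.I))
                  ltac:(lra)).
  destruct (solution_unique _ _ _ _ _ _ _ _ S' Sc ltac:(lra) HT2) as (h & Hh & _ & _ & Eq).
  { intros i; rewrite Rplus_0_r; destruct Sc as (_ & Hc0 & _).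
    rewrite Hc0 by apply Var_not_dvar; reflexivity. }
  destruct (guarded_solution_holds _ _ _ Sc Veq HT2) as (h' & Hh' & _ & HPc).
  exists (Rmin h h'); split; [apply Rmin_pos; auto|]; intros u Hu.
  pose proof (Rmin_l h h'); pose proof (Rmin_r h h').
  apply (holds_assign _ b), (holds_fresh (chi (u - s))); [|apply HPc; lra].
  intros i _; rewrite <- (Eq (u - s)) by lra.
  replace (s + (u - s)) with u by ring; reflexivity.
Qed.

Lemma guarded_implies_box omega :
  (forall a, box (ode_rel I xs fs guard)
    (fun nu => vec_eq nu xs ys ->
       holds I nu P /\ diamond (ode_rel I xs fs guard) (fun mu => ~ vec_eq mu xs ys) nu)
    (assign omega ys a)) ->
  box (ode_rel I xs fs (fun _ => True)) (fun nu => holds I nu P) omega.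
Proof.
  intros HR nu Hrel; apply ode_rel_solution in Hrel as (T & phi & S & <-).
  apply NNPP; intros Hneg.
  destruct (first_failure (fun u => holds I (phi u) P) T (proj1 S) Hneg)
    as (s & Hs & Hbefore & Hafter).
  set (a := fun k => phi s (xvar k)).
  assert (Veq : vec_eq (assign (phi s) ys a) xs ys).
  { intros k Hk; change (assign (phi s) ys a (xvar k) = assign (phi s) ys a (Var (nth k ys O))).
    rewrite assign_xvar, assign_ynth by lia; reflexivity. }
  assert (Hrel : ode_rel I xs fs guard (assign omega ys a) (assign (phi s) ys a)).
  { apply ode_rel_solution; exists s, (fun t => assign (phi t) ys a); split; auto.
    apply solution_assign with (Q := fun _ => True); [apply solution_restrict with T; auto|].
    intros t Ht; destruct (Req_dec t s) as [->|Hts]; [right; exact Veq|].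
    left; apply holds_assign, Hbefore; lra. }
  destruct (HR a _ Hrel Veq) as (HPs & mu & Hrel2 & Hnv); apply holds_assign in HPs.
  apply ode_rel_solution in Hrel2 as (T2 & chi & Sc & <-).
  assert (HT2 : 0 < T2).
  { destruct Sc as (HT2 & Hc0 & _); destruct (Req_dec T2 0) as [->|]; [|lra].
    exfalso; apply Hnv; intros k Hk; rewrite !Hc0 by apply Var_not_dvar; apply Veq, Hk. }
  destruct (Hafter 1 ltac:(lra)) as (u0 & Hu0 & _ & Hnu0).
  assert (HsT : s < T) by (destruct (Req_dec u0 s) as [->|]; [contradiction | lra]).
  destruct (holds_right_after omega a T phi s T2 chi S ltac:(lra) Sc Veq HT2) as (h & Hh & HPu).
  destruct (Hafter h Hh) as (u & Hu & Hud & Hnu).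
  destruct (Req_dec u s) as [->|Hus]; [contradiction | apply Hnu, HPu; lra].
Qed.

End Fresh.

End Solutions.

Theorem lemma5p5
  (Sym : Type) (Hfin : exists l : list Sym, forall s, In s l)
  (ar : Sym -> nat) (I : Sym -> (nat -> R) -> R)
  (HI : forall s, smooth_k (ar s) (I s))
  (xs : list nat) (fs : list (term Sym)) (P : fml Sym) (ys : list nat)
  (Hxs : NoDup xs) (Hlen : length fs = length xs)
  (Hfdf : forall t, In t fs -> dfree t = true)
  (Hevolve : forall st : state, exists k, (k < length xs)%nat /\
               eval I st (nth k fs (TConst Sym 0%Q)) <> 0)
  (HP : semianalytic P = true)
  (Hys : NoDup ys) (Hylen : length ys = length xs)
  (Hfresh : forall y, In y ys ->
     ~ In y xs /\
     (forall t, In t fs -> occurs (Var y) t = false) /\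
     occurs_fml (Var y) P = false)
  (omega : state) :
  box (ode_rel I xs fs (fun _ => True)) (fun nu => holds I nu P) omega
  <->
  (forall a : nat -> R,
     let D := fun st => holds I st P \/ vec_eq st xs ys in
     box (ode_rel I xs fs D)
       (fun nu => vec_eq nu xs ys ->
          holds I nu P /\
          diamond (ode_rel I xs fs D) (fun mu => ~ vec_eq mu xs ys) nu)
       (assign omega ys a)).
Proof.
  split.
  - intros HL a D; eapply box_implies_guarded; eauto.
  - eapply guarded_implies_box; eauto.
Qed.
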